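(* Assume the setting described in the context (quadratic nonlinearity with exponentially decaying semigroup estimators and forcing). Let $f_0\in F$, put $F_0:=\|f_0\|+NJ$, and assume $4KNF_0\le1$. Then VP$(f_0)$ has a global solution $\varphi:[0,+\infty)\to F$ and, for all $t\ge0$, $\|\varphi(t)\|\le F_0\,\mathcal X(4KNF_0)\,e^{-Bt}$, where $\mathcal X(z):=(1-\sqrt{1-z})/(z/2)$ for $z\in(0,1]$ and $\mathcal X(0):=1$.
   Context: Banach spaces over a common field. $X\hookrightarrow Y$ means $X$ is a dense subspace of $Y$ with continuous inclusion. Setting: $F_+,F,F_-$ Banach spaces with norms $\|\cdot\|_+,\|\cdot\|,\|\cdot\|_-$, $F_+\hookrightarrow F\hookrightarrow F_-$; $\mathcal A:F_+\to F_-$ linear with $\|\cdot\|_+$ equivalent on $F_+$ to $\|f\|_-+\|\mathcal Af\|_-$; $\mathcal A$ generates a strongly continuous semigroup $(e^{t\mathcal A})_{t\ge0}$ on $F_-$ (domain $F_+$); $e^{t\mathcal A}(F)\subset F$ ($t\ge0$) with $(f,t)\mapsto e^{t\mathcal A}f$ continuous $F\times[0,\infty)\to F$; $e^{t\mathcal A}(F_-)\subset F$ ($t>0$) with $(f,t)\mapsto e^{t\mathcal A}f$ continuous $F_-\times(0,\infty)\to F$. There are constants $B\ge0$, $N>0$ with $\|e^{t\mathcal A}f\|\le e^{-Bt}\|f\|$ ($t\ge0$, $f\in F$) and $\|e^{t\mathcal A}f\|\le\mu_-(t)e^{-Bt}\|f\|_-$ ($t>0$, $f\in F_-$), where $\mu_-\in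 C((0,\infty),(0,\infty))$, $\mu_-(t)=O(t^{-(1-\sigma)})$ as $t\to0^+$ for some $\sigma\in(0,1]$, and $\int_0^t\mu_-(t-s)e^{-Bs}ds\le N$ for all $t\ge0$. $\mathscr P:F\times F\to F_-$ bilinear with $\|\mathscr P(f,g)\|_-\le K\|f\|\|g\|$, $K\in(0,\infty)$; $\xi:[0,+\infty)\to F_-$ locally Lipschitz with $\|\xi(t)\|_-\le Je^{-2Bt}$ for all $t\ge0$, for a constant $J\ge0$; $\mathcal P(f,t):=\mathscr P(f,f)+\xi(t)$. VP$(f_0)$ asks for $\varphi\in C([0,T),F)$ with $\varphi(t)=e^{t\mathcal A}f_0+\int_0^te^{(t-s)\mathcal A}\mathcal P(\varphi(s),s)\,ds$ for $t\in[0,T)$. *)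

From Stdlib Require Import Reals Lra.
From Coquelicot Require Import Coquelicot.
Open Scope R_scope.

Definition linear_map {U V : NormedModule R_AbsRing} (f : U -> V) : Prop :=
  (forall x y, f (plus x y) = plus (f x) (f y)) /\
  (forall (a : R) x, f (scal a x) = scal a (f x)).

Definition bounded_linear_map {U V : NormedModule R_AbsRing} (f : U -> V) : Prop :=
  linear_map f /\ exists C : R, forall x, norm (f x) <= C * norm x.

Definition is_bilinear {U V W : NormedModule R_AbsRing} (P : U -> V -> W) : Prop :=
  (forall y, linear_map (fun x => P x y)) /\ (forall x, linear_map (fun y => P x y)).

Definition dense_embedding {U V : NormedModule R_AbsRing} (i : U -> V) : Prop :=
  bounded_linear_map i /\
  (forall x y, i x = i y -> x = y) /\
  (forall (v : V) (eps : R), 0 < eps -> exists u : U, norm (minus (i u) v) < eps).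

(* (A, domain given by the range of iD) generates the strongly continuous
   semigroup S on the space V. *)
Definition generates_C0_semigroup {D V : NormedModule R_AbsRing}
    (iD : D -> V) (A : D -> V) (S : R -> V -> V) : Prop :=
  (forall t, 0 <= t -> bounded_linear_map (S t)) /\
  (forall x, S 0 x = x) /\
  (forall t s x, 0 <= t -> 0 <= s -> S (t + s) x = S t (S s x)) /\
  (forall x t, 0 <= t -> forall eps, 0 < eps -> exists delta, 0 < delta /\
      forall s, 0 <= s -> Rabs (s - t) < delta -> norm (minus (S s x) (S t x)) < eps) /\
  (forall x v,
      filterlim (fun h => scal (/ h) (minus (S h x) x)) (at_right 0) (locally v)
      <-> exists y : D, x = iD y /\ v = A y).

Definition jointly_continuous_on {U V : NormedModule R_AbsRing}
    (I : R -> Prop) (T : R -> U -> V) : Prop :=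
  forall f t, I t -> forall eps, 0 < eps -> exists delta, 0 < delta /\
    forall g s, I s -> norm (minus g f) < delta -> Rabs (s - t) < delta ->
      norm (minus (T s g) (T t f)) < eps.

Definition continuous_on_nonneg {V : NormedModule R_AbsRing} (phi : R -> V) : Prop :=
  forall t, 0 <= t -> forall eps, 0 < eps -> exists delta, 0 < delta /\
    forall s, 0 <= s -> Rabs (s - t) < delta -> norm (minus (phi s) (phi t)) < eps.

Definition locally_lipschitz_nonneg {V : NormedModule R_AbsRing} (xi : R -> V) : Prop :=
  forall T, 0 <= T -> exists L, forall s t, 0 <= s <= T -> 0 <= t <= T ->
    norm (minus (xi t) (xi s)) <= L * Rabs (t - s).

Definition Xfun (z : R) : R :=
  if Req_EM_T z 0 then 1 else (1 - sqrt (1 - z)) / (z / 2).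

From Stdlib Require Import Reals Lra Lia Classical ClassicalEpsilon.
From Coquelicot Require Import Coquelicot.
Open Scope R_scope.

(* Picard iteration for phi = e^(tA) f0 + D(P(phi)), D the Duhamel integral, with the
   iterates measured by ||phi_n(t)|| <= R_n e^(-Bt).  The kernel bound gives
   R_(n+1) = F0 + K N R_n^2, an increasing sequence bounded by the smaller root
   R* = F0 X(4 K N F0) of R = F0 + K N R^2; this root exists because 4 K N F0 <= 1.
   Bilinearity of P gives ||phi_(n+1)(t) - phi_n(t)|| <= (R_(n+1) - R_n) e^(-Bt), so the
   iterates converge uniformly to a continuous fixed point with ||phi(t)|| <= R* e^(-Bt).
   Because mu is singular at 0, the Duhamel integral exists in F only as an improper
   integral; identifying it with the Riemann integral in F_- needs e^(rA) to be bounded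
   uniformly for small r, which follows from the uniform boundedness principle. *)

Lemma minus_plus_l {G : AbelianGroup} (s y : G) : minus (plus s y) s = y.
Proof.
  unfold minus. rewrite <- plus_assoc, (plus_comm y).
  transitivity (plus (plus s (opp s)) y); [apply plus_assoc|].
  rewrite plus_opp_r. apply plus_zero_l.
Qed.

Lemma minus_plus_plus {G : AbelianGroup} (a b c d : G) :
  minus (plus a b) (plus c d) = plus (minus a c) (minus b d).
Proof.
  unfold minus. rewrite opp_plus, <- !plus_assoc. f_equal.
  rewrite (plus_comm b), <- plus_assoc. f_equal. apply plus_comm.
Qed.

Lemma minus_opp_opp {G : AbelianGroup} (x y : G) : minus (opp x) (opp y) = opp (minus x y).
Proof. unfold minus. symmetry. apply opp_plus. Qed.

Lemma exp_le x y : x <= y -> exp x <= exp y.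
Proof. intros [H|H]; [left; apply exp_increasing, H|subst; right; reflexivity]. Qed.

Lemma exp_nonpos_le1 x : x <= 0 -> exp x <= 1.
Proof. intros H. rewrite <- exp_0. apply exp_le, H. Qed.

Lemma Rmax0_lipschitz y z : Rabs (Rmax 0 y - Rmax 0 z) <= Rabs (y - z).
Proof.
  unfold Rmax. destruct (Rle_dec 0 y), (Rle_dec 0 z); unfold Rabs;
    repeat destruct Rcase_abs; lra.
Qed.

Lemma Rmax0_idem y : Rmax 0 (Rmax 0 y) = Rmax 0 y.
Proof. apply Rmax_right, Rmax_l. Qed.

Lemma Xfun_fixed_point K N F0 : 0 <= K -> 0 <= N -> 0 <= F0 -> 4 * K * N * F0 <= 1 ->
  0 <= F0 * Xfun (4 * K * N * F0) /\
  F0 * Xfun (4 * K * N * F0) = F0 + K * N * (F0 * Xfun (4 * K * N * F0)) ^ 2.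
Proof.
  intros HK HN HF0 Hsmall. unfold Xfun.
  destruct (Req_EM_T (4 * K * N * F0) 0) as [Hz|Hz]; [split; nra|].
  assert (HKp : 0 < K) by (destruct HK as [|<-]; [assumption|exfalso; apply Hz; ring]).
  assert (HNp : 0 < N) by (destruct HN as [|<-]; [assumption|exfalso; apply Hz; ring]).
  assert (HF0p : 0 < F0) by (destruct HF0 as [|<-]; [assumption|exfalso; apply Hz; ring]).
  assert (HKN : 0 < K * N) by (apply Rmult_lt_0_compat; lra).
  assert (0 < K * N * F0) by (apply Rmult_lt_0_compat; lra).
  set (q := sqrt (1 - 4 * K * N * F0)).
  assert (Hq2 : q * q = 1 - 4 * K * N * F0) by (apply sqrt_sqrt; lra).
  assert (Hq0 : 0 <= q) by apply sqrt_pos.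
  replace (F0 * ((1 - q) / (4 * K * N * F0 / 2))) with ((1 - q) / (2 * (K * N))) by (field; lra).
  split; [apply Rdiv_le_0_compat; nra|].
  replace F0 with ((1 - q * q) / (4 * (K * N))) at 1 by (rewrite Hq2; field; lra).
  field. lra.
Qed.

Section NormedModuleFacts.
Context {V : NormedModule R_AbsRing}.

Lemma norm_scal_R (a : R) (x : V) : norm (scal a x) = Rabs a * norm x.
Proof.
  apply Rle_antisym; [exact (norm_scal a x)|].
  destruct (Req_dec a 0) as [->|Ha].
  - rewrite Rabs_R0, Rmult_0_l; apply norm_ge_0.
  - assert (H : norm x <= Rabs (/ a) * norm (scal a x)).
    { replace x with (scal (/a) (scal a x)) at 1 by
        (rewrite scal_assoc; change (mult (/a) a) with (/a * a);
         rewrite Rinv_l by exact Ha; exact (scal_one x)).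
      exact (norm_scal _ _). }
    rewrite Rabs_inv in H.
    assert (0 < Rabs a) by (apply Rabs_pos_lt; exact Ha).
    apply (Rmult_le_compat_l (Rabs a)) in H; [|lra].
    rewrite <- Rmult_assoc, Rinv_r in H by lra. lra.
Qed.

Lemma norm_minus_sym (x y : V) : norm (minus x y) = norm (minus y x).
Proof. rewrite <- norm_opp, opp_minus. reflexivity. Qed.

Lemma norm_triangle_minus (x y z : V) :
  norm (minus x z) <= norm (minus x y) + norm (minus y z).
Proof. rewrite (minus_trans y). apply norm_triangle. Qed.

Lemma norm_minus_le (x y : V) : norm (minus x y) <= norm x + norm y.
Proof. unfold minus. eapply Rle_trans; [apply norm_triangle|]. rewrite norm_opp. lra. Qed.

Lemma norm_minus_self (x : V) : norm (minus x x) = 0.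
Proof. rewrite minus_eq_zero. exact (@norm_zero R_AbsRing V). Qed.

Lemma norm_minus_small_eq (x y : V) :
  (forall eta, 0 < eta -> norm (minus x y) <= eta) -> x = y.
Proof.
  intros H.
  assert (Hxy : minus x y = zero).
  { apply norm_eq_zero, Rle_antisym; [|apply norm_ge_0].
    apply Rnot_lt_le. intros Hlt. specialize (H (norm (minus x y) / 2) ltac:(lra)). lra. }
  assert (E : plus (minus x y) y = x)
    by (unfold minus; rewrite <- plus_assoc, plus_opp_l, plus_zero_r; reflexivity).
  rewrite <- E, Hxy. apply plus_zero_l.
Qed.

Lemma filterlim_locally_norm {T} {Fl : (T -> Prop) -> Prop} {FF : Filter Fl} (f : T -> V) y :
  filterlim f Fl (locally y) <->
  forall eps, 0 < eps -> Fl (fun x => norm (minus (f x) y) < eps).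
Proof.
  set (nf := @norm_factor R_AbsRing V).
  assert (Hnf : 0 < nf) by apply norm_factor_gt_0. split.
  - intros H eps Heps.
    assert (He : 0 < eps / nf) by (apply Rdiv_lt_0_compat; lra).
    generalize (proj1 (filterlim_locally f y) H (mkposreal _ He)).
    apply filter_imp. intros x Hx. apply norm_compat2 in Hx. simpl in Hx. fold nf in Hx.
    replace (nf * (eps / nf)) with eps in Hx by (field; lra). exact Hx.
  - intros H. apply filterlim_locally. intros eps.
    generalize (H eps (cond_pos eps)). apply filter_imp. intros x Hx. apply norm_compat1, Hx.
Qed.

Lemma continuous_eps_delta (f : R -> V) x :
  continuous f x <-> forall eps, 0 < eps -> exists d, 0 < d /\
    forall y, Rabs (y - x) < d -> norm (minus (f y) (f x)) < eps.
Proof.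
  unfold continuous. split.
  - intros H eps Heps.
    destruct (proj1 (filterlim_locally_norm f (f x)) H eps Heps) as [d Hd].
    exists d. split; [apply cond_pos|]. intros y Hy. apply Hd, Hy.
  - intros H. apply filterlim_locally_norm. intros eps Heps.
    destruct (H eps Heps) as [d [Hd Hy]].
    exists (mkposreal d Hd). intros y Hy'. apply Hy, Hy'.
Qed.

End NormedModuleFacts.

Section LinearMaps.
Context {U W : NormedModule R_AbsRing}.

Lemma linear_map_zero (h : U -> W) : linear_map h -> h zero = zero.
Proof.
  intros [_ Hs]. transitivity (h (scal 0 (zero : U))).
  - f_equal. symmetry. exact (scal_zero_l (zero : U)).
  - rewrite Hs. exact (scal_zero_l (h zero)).
Qed.

Lemma linear_map_opp (h : U -> W) x : linear_map h -> h (opp x) = opp (h x).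
Proof.
  intros [_ Hs]. transitivity (h (scal (opp (one : R_AbsRing)) x)).
  - f_equal. symmetry. exact (scal_opp_one x).
  - rewrite Hs. exact (scal_opp_one (h x)).
Qed.

Lemma linear_map_minus (h : U -> W) x y : linear_map h -> h (minus x y) = minus (h x) (h y).
Proof. intros Hl. unfold minus. rewrite (proj1 Hl), linear_map_opp by exact Hl. reflexivity. Qed.

Lemma Riemann_sum_linear_map (h : U -> W) (f : R -> U) ptd : linear_map h ->
  Riemann_sum (fun x => h (f x)) ptd = h (Riemann_sum f ptd).
Proof.
  intros Hl. destruct ptd as [x0 l]. unfold Riemann_sum. simpl.
  generalize (x0, (zero : R)) as p.
  induction l as [|y l IH]; intros p; simpl.
  - symmetry. apply linear_map_zero, Hl.
  - rewrite IH, (proj1 Hl), (proj2 Hl). reflexivity.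
Qed.

Lemma bounded_linear_map_continuous (h : U -> W) l :
  bounded_linear_map h -> filterlim h (locally l) (locally (h l)).
Proof.
  intros [Hl [C HC]]. apply filterlim_locally_norm. intros eps Heps.
  set (C' := Rmax C 1).
  assert (HC' : 0 < C') by (unfold C'; generalize (Rmax_r C 1); lra).
  assert (He : 0 < eps / C') by (apply Rdiv_lt_0_compat; lra).
  generalize (proj1 (filterlim_locally_norm (fun x => x) l) (filterlim_id _ _) _ He).
  apply filter_imp. intros x Hx. rewrite <- linear_map_minus by exact Hl.
  eapply Rle_lt_trans; [apply HC|].
  apply Rle_lt_trans with (C' * norm (minus x l)).
  - apply Rmult_le_compat_r; [apply norm_ge_0|apply Rmax_l].
  - apply (Rmult_lt_compat_l C') in Hx; [|lra].
    replace (C' * (eps / C')) with eps in Hx by (field; lra). exact Hx.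
Qed.

Lemma is_RInt_bounded_linear_map (h : U -> W) (f : R -> U) a b l :
  bounded_linear_map h -> is_RInt f a b l -> is_RInt (fun x => h (f x)) a b (h l).
Proof.
  intros Hb Hf. unfold is_RInt in *.
  apply (filterlim_ext (fun ptd => h (scal (sign (b - a)) (Riemann_sum f ptd)))).
  { intros ptd. rewrite (proj2 (proj1 Hb)), Riemann_sum_linear_map by exact (proj1 Hb).
    reflexivity. }
  eapply filterlim_comp; [exact Hf|]. apply bounded_linear_map_continuous, Hb.
Qed.

End LinearMaps.

(* Coquelicot's lemmas do not unify through the coercion
   CompleteNormedModule >-> NormedModule (neither [rewrite] nor [lra] see the two
   structure paths as equal), so the facts used on complete spaces are restated. *)
Section CompleteNormedModuleFacts.
Context {V : CompleteNormedModule R_AbsRing}.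

Lemma normC_ge0 (x : V) : 0 <= norm x.
Proof. exact (norm_ge_0 x). Qed.
Lemma normC_zero : norm (zero : V) = 0.
Proof. exact (@norm_zero R_AbsRing V). Qed.
Lemma normC_eq_zero (x : V) : norm x = 0 -> x = zero.
Proof. exact (norm_eq_zero x). Qed.
Lemma normC_scal (a : R) (x : V) : norm (scal a x) = Rabs a * norm x.
Proof. exact (norm_scal_R a x). Qed.
Lemma normC_triangle (x y : V) : norm (plus x y) <= norm x + norm y.
Proof. exact (norm_triangle x y). Qed.
Lemma normC_minus_sym (x y : V) : norm (minus x y) = norm (minus y x).
Proof. exact (norm_minus_sym x y). Qed.
Lemma normC_triangle_minus (x y z : V) :
  norm (minus x z) <= norm (minus x y) + norm (minus y z).
Proof. exact (norm_triangle_minus x y z). Qed.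
Lemma normC_minus_le (x y : V) : norm (minus x y) <= norm x + norm y.
Proof. exact (norm_minus_le x y). Qed.
Lemma normC_ge_minus (x y : V) : norm x - norm y <= norm (minus x y).
Proof. exact (Rle_trans _ _ _ (Rle_abs _) (norm_triangle_inv x y)). Qed.
Lemma normC_minus_self (x : V) : norm (minus x x) = 0.
Proof. exact (norm_minus_self x). Qed.
Lemma normC_minus_opp (x y : V) : norm (minus (opp x) (opp y)) = norm (minus x y).
Proof. rewrite (minus_opp_opp x y). exact (norm_opp _). Qed.
Lemma minusC_eq_zero (x : V) : minus x x = zero.
Proof. exact (minus_eq_zero x). Qed.
Lemma minusC_zero_r (x : V) : minus x zero = x.
Proof. exact (minus_zero_r x). Qed.
Lemma minusC_plus_l (s y : V) : minus (plus s y) s = y.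
Proof. exact (minus_plus_l s y). Qed.
Lemma minusC_plus_plus (a b c d : V) :
  minus (plus a b) (plus c d) = plus (minus a c) (minus b d).
Proof. exact (minus_plus_plus a b c d). Qed.
Lemma minusC_plus_r (a b x : V) : minus (plus a x) (plus b x) = minus a b.
Proof. rewrite minusC_plus_plus, minusC_eq_zero. exact (plus_zero_r _). Qed.
Lemma normC_minus_plus_l (x y z : V) : norm (minus (plus x y) (plus x z)) = norm (minus y z).
Proof. rewrite minusC_plus_plus, minusC_eq_zero. f_equal. exact (plus_zero_l _). Qed.
Lemma continuousC_eps (f : R -> V) x : continuous f x ->
  forall eps, 0 < eps -> exists d, 0 < d /\
    forall y, Rabs (y - x) < d -> norm (minus (f y) (f x)) < eps.
Proof. exact (proj1 (continuous_eps_delta f x)). Qed.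
Lemma continuousC_of_eps (f : R -> V) x :
  (forall eps, 0 < eps -> exists d, 0 < d /\
    forall y, Rabs (y - x) < d -> norm (minus (f y) (f x)) < eps) -> continuous f x.
Proof. exact (proj2 (continuous_eps_delta f x)). Qed.
Lemma normC_small_eq (x y : V) :
  (forall eta, 0 < eta -> norm (minus x y) <= eta) -> x = y.
Proof. exact (norm_minus_small_eq x y). Qed.

End CompleteNormedModuleFacts.

Section CompleteLinearMaps.
Context {U W : CompleteNormedModule R_AbsRing}.

Lemma linC_plus (h : U -> W) x y : linear_map h -> h (plus x y) = plus (h x) (h y).
Proof. intros H. exact (proj1 H x y). Qed.
Lemma linC_scal (h : U -> W) a x : linear_map h -> h (scal a x) = scal a (h x).
Proof. intros H. exact (proj2 H a x). Qed.
Lemma linC_zero (h : U -> W) : linear_map h -> h zero = zero.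
Proof. exact (linear_map_zero h). Qed.
Lemma linC_minus (h : U -> W) x y : linear_map h -> h (minus x y) = minus (h x) (h y).
Proof. exact (linear_map_minus h x y). Qed.

End CompleteLinearMaps.

Section Limits.
Context {V : CompleteNormedModule R_AbsRing}.

Definition lim0 (g : R -> V) (l : V) : Prop :=
  forall eta, 0 < eta -> exists d, 0 < d /\
    forall e, 0 < e < d -> norm (minus (g e) l) <= eta.

Definition limseq (u : nat -> V) (l : V) : Prop :=
  forall eta, 0 < eta -> exists n0, forall n, (n0 <= n)%nat -> norm (minus (u n) l) <= eta.

Lemma lim0_le (g : R -> V) l y c : lim0 g l ->
  (exists d, 0 < d /\ forall e, 0 < e < d -> norm (minus (g e) y) <= c) ->
  norm (minus l y) <= c.
Proof.
  intros Hl [d [Hd Hc]]. apply Rnot_lt_le. intros Hlt.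
  destruct (Hl ((norm (minus l y) - c) / 2)) as [d' [Hd' H']]; [lra|].
  set (e := Rmin d d' / 2).
  assert (He : 0 < e < d /\ 0 < e < d').
  { unfold e. generalize (Rmin_l d d') (Rmin_r d d') (Rmin_pos d d' Hd Hd'). lra. }
  specialize (H' e (proj2 He)). specialize (Hc e (proj1 He)).
  generalize (normC_triangle_minus l (g e) y). rewrite normC_minus_sym in H'. lra.
Qed.

Lemma lim0_norm_le (g : R -> V) l c : lim0 g l ->
  (exists d, 0 < d /\ forall e, 0 < e < d -> norm (g e) <= c) -> norm l <= c.
Proof.
  intros H [d [Hd Hc]]. rewrite <- (minusC_zero_r l). apply (lim0_le g l zero c H).
  exists d. split; [exact Hd|]. intros e He. rewrite minusC_zero_r. auto.
Qed.

Lemma lim0_unique (g : R -> V) l1 l2 : lim0 g l1 -> lim0 g l2 -> l1 = l2.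
Proof.
  intros H1 H2. apply normC_small_eq. intros eta Heta.
  apply (lim0_le g l1 l2 eta H1), H2, Heta.
Qed.

Lemma lim0_ext (g1 g2 : R -> V) l :
  (exists d, 0 < d /\ forall e, 0 < e < d -> g1 e = g2 e) -> lim0 g1 l -> lim0 g2 l.
Proof.
  intros [d [Hd Heq]] H eta Heta. destruct (H eta Heta) as [d' [Hd' H']].
  exists (Rmin d d'). split; [apply Rmin_pos; auto|]. intros e He.
  generalize (Rmin_l d d') (Rmin_r d d'); intros.
  rewrite <- Heq by lra. apply H'. lra.
Qed.

Lemma lim0_const (x : V) : lim0 (fun _ => x) x.
Proof.
  intros eta Heta. exists 1. split; [lra|]. intros e _. rewrite normC_minus_self. lra.
Qed.

Lemma lim0_plus (g1 g2 : R -> V) l1 l2 :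
  lim0 g1 l1 -> lim0 g2 l2 -> lim0 (fun e => plus (g1 e) (g2 e)) (plus l1 l2).
Proof.
  intros H1 H2 eta Heta.
  destruct (H1 (eta / 2)) as [d1 [Hd1 H1']]; [lra|].
  destruct (H2 (eta / 2)) as [d2 [Hd2 H2']]; [lra|].
  exists (Rmin d1 d2). split; [apply Rmin_pos; auto|]. intros e He.
  generalize (Rmin_l d1 d2) (Rmin_r d1 d2); intros.
  rewrite minusC_plus_plus. eapply Rle_trans; [apply normC_triangle|].
  specialize (H1' e ltac:(lra)). specialize (H2' e ltac:(lra)). lra.
Qed.

Lemma lim0_minus (g1 g2 : R -> V) l1 l2 :
  lim0 g1 l1 -> lim0 g2 l2 -> lim0 (fun e => minus (g1 e) (g2 e)) (minus l1 l2).
Proof.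
  intros H1 H2. apply lim0_plus; [exact H1|].
  intros eta Heta. destruct (H2 eta Heta) as [d [Hd H']]. exists d. split; [exact Hd|].
  intros e He. rewrite normC_minus_opp. apply H', He.
Qed.

Lemma lim0_exists (g : R -> V) :
  (forall eta, 0 < eta -> exists d, 0 < d /\ forall e e', 0 < e < d -> 0 < e' < d ->
     norm (minus (g e) (g e')) <= eta) ->
  exists l, lim0 g l.
Proof.
  intros Hc.
  set (Fl := filtermap g (at_right 0)).
  assert (FF : ProperFilter Fl) by (apply filtermap_proper_filter, at_right_proper_filter).
  assert (HC : cauchy Fl).
  { intros eps. destruct (Hc (eps / 2)) as [d [Hd H]]; [generalize (cond_pos eps); lra|].
    exists (g (d / 2)). exists (mkposreal d Hd).
    intros y Hy Hy0. apply (@norm_compat1 R_AbsRing V).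
    apply Rle_lt_trans with (eps / 2); [|generalize (cond_pos eps); lra].
    apply H; [|lra]. change (Rabs (y - 0) < d) in Hy.
    rewrite Rminus_0_r, Rabs_right in Hy by lra. lra. }
  exists (lim Fl). intros eta Heta.
  set (nf := @norm_factor R_AbsRing V).
  assert (Hnf : 0 < nf) by apply norm_factor_gt_0.
  assert (He : 0 < eta / nf) by (apply Rdiv_lt_0_compat; lra).
  destruct (complete_cauchy Fl FF HC (mkposreal _ He)) as [d Hd].
  exists d. split; [apply cond_pos|]. intros e [He0 He1].
  assert (Hb : ball (lim Fl) (mkposreal _ He) (g e)).
  { apply Hd; [|exact He0]. change (Rabs (e - 0) < d).
    rewrite Rminus_0_r, Rabs_right by lra. exact He1. }
  apply (@norm_compat2 R_AbsRing V) in Hb. simpl in Hb. fold nf in Hb.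
  replace (nf * (eta / nf)) with eta in Hb by (field; lra). exact (Rlt_le _ _ Hb).
Qed.

Definition Lim0 (g : R -> V) : V := epsilon (inhabits zero) (lim0 g).

Lemma Lim0_spec (g : R -> V) : (exists l, lim0 g l) -> lim0 g (Lim0 g).
Proof. apply epsilon_spec. Qed.

Lemma limseq_le (u : nat -> V) l y c : limseq u l ->
  (exists n0, forall n, (n0 <= n)%nat -> norm (minus (u n) y) <= c) ->
  norm (minus l y) <= c.
Proof.
  intros Hl [n0 Hc]. apply Rnot_lt_le. intros Hlt.
  destruct (Hl ((norm (minus l y) - c) / 2)) as [n1 H']; [lra|].
  specialize (H' (max n0 n1) ltac:(lia)). specialize (Hc (max n0 n1) ltac:(lia)).
  generalize (normC_triangle_minus l (u (max n0 n1)) y). rewrite normC_minus_sym in H'. lra.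
Qed.

Lemma limseq_unique (u : nat -> V) l1 l2 : limseq u l1 -> limseq u l2 -> l1 = l2.
Proof.
  intros H1 H2. apply normC_small_eq. intros eta Heta.
  apply (limseq_le u l1 l2 eta H1), H2, Heta.
Qed.

Lemma limseq_shift (u : nat -> V) l : limseq u l -> limseq (fun n => u (S n)) l.
Proof.
  intros H eta Heta. destruct (H eta Heta) as [n0 Hn0]. exists n0. intros n Hn. apply Hn0. lia.
Qed.

Lemma limseq_exists (u : nat -> V) :
  (forall eta, 0 < eta -> exists n0, forall n m, (n0 <= n)%nat -> (n0 <= m)%nat ->
     norm (minus (u n) (u m)) <= eta) ->
  exists l, limseq u l.
Proof.
  intros Hc.
  set (Fl := filtermap u eventually).
  assert (FF : ProperFilter Fl) by (apply filtermap_proper_filter, eventually_filter).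
  assert (HC : cauchy Fl).
  { intros eps. destruct (Hc (eps / 2)) as [n0 H]; [generalize (cond_pos eps); lra|].
    exists (u n0). exists n0. intros n Hn. apply (@norm_compat1 R_AbsRing V).
    apply Rle_lt_trans with (eps / 2); [|generalize (cond_pos eps); lra].
    apply H; lia. }
  exists (lim Fl). intros eta Heta.
  set (nf := @norm_factor R_AbsRing V).
  assert (Hnf : 0 < nf) by apply norm_factor_gt_0.
  assert (He : 0 < eta / nf) by (apply Rdiv_lt_0_compat; lra).
  destruct (complete_cauchy Fl FF HC (mkposreal _ He)) as [n0 Hn0].
  exists n0. intros n Hn. assert (Hb := Hn0 n Hn).
  apply (@norm_compat2 R_AbsRing V) in Hb. simpl in Hb. fold nf in Hb.
  replace (nf * (eta / nf)) with eta in Hb by (field; lra). exact (Rlt_le _ _ Hb).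
Qed.

Lemma RInt_minus_Chasles (f : R -> V) b x y : ex_RInt f b x -> ex_RInt f x y ->
  minus (RInt f b y) (RInt f b x) = RInt f x y.
Proof. intros H1 H2. rewrite <- (RInt_Chasles f b x y H1 H2). apply minusC_plus_l. Qed.

Lemma RInt_upper_lim0 (f : R -> V) a b : a < b -> (forall z, a <= z <= b -> continuous f z) ->
  lim0 (fun e => RInt f a (Rmax a (b - e))) (RInt f a b).
Proof.
  intros Hab Hf eta Heta.
  destruct (continuousC_eps f b (Hf b ltac:(lra)) 1 Rlt_0_1) as [d1 [Hd1 H1]].
  set (M := norm (f b) + 1).
  assert (HM : 0 < M) by (unfold M; generalize (normC_ge0 (f b)); lra).
  exists (Rmin (Rmin d1 (b - a)) (eta / M)). split.
  { apply Rmin_pos; [apply Rmin_pos; lra|apply Rdiv_lt_0_compat; lra]. }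
  intros e He.
  generalize (Rmin_l (Rmin d1 (b - a)) (eta / M)) (Rmin_r (Rmin d1 (b - a)) (eta / M))
    (Rmin_l d1 (b - a)) (Rmin_r d1 (b - a)). intros.
  rewrite Rmax_right by lra.
  assert (E1 : ex_RInt f a (b - e)).
  { apply ex_RInt_continuous. intros z Hz. rewrite Rmin_left, Rmax_right in Hz by lra.
    apply Hf. lra. }
  assert (E2 : ex_RInt f (b - e) b).
  { apply ex_RInt_continuous. intros z Hz. rewrite Rmin_left, Rmax_right in Hz by lra.
    apply Hf. lra. }
  rewrite normC_minus_sym, RInt_minus_Chasles by assumption.
  apply Rle_trans with (e * M).
  - apply (norm_RInt_le f (fun _ => M) (b - e) b _ (e * M)); [lra| |apply RInt_correct, E2|].
    + intros x Hx.
      assert (Hx' : norm (minus (f x) (f b)) < 1) by (apply H1; apply Rabs_def1; lra).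
      generalize (normC_ge_minus (f x) (f b)). unfold M. lra.
    + replace (e * M) with (scal (b - (b - e)) M)
        by (change ((b - (b - e)) * M = e * M); ring).
      exact (is_RInt_const (V := R_NormedModule) (b - e) b M).
  - apply Rle_trans with ((eta / M) * M); [apply Rmult_le_compat_r; lra|].
    right. field. lra.
Qed.

End Limits.

Lemma lim0_bounded_linear_map {U W : CompleteNormedModule R_AbsRing} (h : U -> W) (g : R -> U) l :
  bounded_linear_map h -> lim0 g l -> lim0 (fun e => h (g e)) (h l).
Proof.
  intros [Hl [C HC]] H eta Heta.
  set (C' := Rmax C 1).
  assert (HC' : 0 < C') by (unfold C'; generalize (Rmax_r C 1); lra).
  destruct (H (eta / C')) as [d [Hd H']]; [apply Rdiv_lt_0_compat; lra|].
  exists d. split; [exact Hd|]. intros e He. rewrite <- linC_minus by exact Hl.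
  eapply Rle_trans; [apply HC|].
  apply Rle_trans with (C' * norm (minus (g e) l)).
  - apply Rmult_le_compat_r; [apply normC_ge0|apply Rmax_l].
  - specialize (H' e He). apply (Rmult_le_compat_l C') in H'; [|lra].
    replace (C' * (eta / C')) with eta in H' by (field; lra). exact H'.
Qed.

Lemma inv_pow2_small eta : 0 < eta -> exists n0, forall n, (n0 <= n)%nat -> / 2 ^ n <= eta.
Proof.
  intros He. destruct (archimed_cor1 eta He) as [n0 [Hn0 Hn0pos]].
  exists n0. intros n Hn.
  assert (Hn2 : INR n <= 2 ^ n).
  { clear. induction n; [simpl; lra|]. rewrite S_INR. simpl.
    assert (1 <= 2 ^ n) by (apply pow_R1_Rle; lra). lra. }
  assert (INR n0 <= INR n) by (apply le_INR, Hn).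
  assert (0 < INR n0) by (apply lt_0_INR, Hn0pos).
  apply Rle_trans with (/ INR n0); [apply Rinv_le_contravar|]; lra.
Qed.

Lemma bounded_on_initial_segment (f : nat -> R) n0 :
  exists M, forall n, (n < n0)%nat -> f n <= M.
Proof.
  induction n0 as [|n0 [M HM]]; [exists 0; intros; lia|].
  exists (Rmax M (f n0)). intros n Hn.
  destruct (Nat.eq_dec n n0) as [->|Hne]; [apply Rmax_r|].
  eapply Rle_trans; [apply HM; lia|apply Rmax_l].
Qed.

Section UniformBoundedness.
Context {V W : CompleteNormedModule R_AbsRing} (T : nat -> V -> W).
Hypothesis T_linear : forall n, linear_map (T n).
Hypothesis T_bounded : forall n, exists C, forall x, norm (T n x) <= C * norm x.
Hypothesis T_pointwise : forall x, exists M, forall n, norm (T n x) <= M.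

Lemma large_values_of_unbounded_family :
  ~ (exists C, forall n x, norm (T n x) <= C * norm x) ->
  forall b eps, 0 < eps -> exists n y, norm y <= eps /\ b <= norm (T n y).
Proof.
  intros Hunb b eps Heps. apply NNPP. intros Hsmall. apply Hunb.
  exists (Rmax 0 b / eps). intros n x. apply Rnot_lt_le. intros Hlt.
  assert (Hx : 0 < norm x).
  { destruct (Rle_lt_or_eq_dec 0 (norm x) (normC_ge0 x)) as [H|H]; [exact H|].
    symmetry in H. apply normC_eq_zero in H. subst x.
    rewrite (linC_zero (T n)), !normC_zero in Hlt by apply T_linear. lra. }
  apply Hsmall. exists n, (scal (eps / norm x) x).
  rewrite (linC_scal (T n)) by apply T_linear. rewrite !normC_scal.
  rewrite Rabs_right by (apply Rle_ge, Rdiv_le_0_compat; lra). split.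
  - right. field. lra.
  - apply Rle_trans with (Rmax 0 b); [apply Rmax_r|]. apply Rlt_le.
    replace (Rmax 0 b) with (eps / norm x * (Rmax 0 b / eps * norm x)) by (field; lra).
    apply Rmult_lt_compat_l; [apply Rdiv_lt_0_compat|]; lra.
Qed.

(* Gliding hump: x_(k+1) = x_k + y_k, where y_k is so small that the later
   humps cannot undo it but [T n_k y_k] dominates everything else at x = lim x_k. *)
Section GlidingHump.
Hypothesis large_values : forall b eps, 0 < eps -> exists n y, norm y <= eps /\ b <= norm (T n y).

Let bound (x : V) : R := proj1_sig (constructive_indefinite_description _ (T_pointwise x)).

Let bound_spec x n : norm (T n x) <= bound x.
Proof. unfold bound. destruct (constructive_indefinite_description _ _) as [M HM]. apply HM. Qed.

Let op_bound_exists n : exists C, 1 <= C /\ forall x, norm (T n x) <= C * norm x.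
Proof.
  destruct (T_bounded n) as [C HC]. exists (Rmax C 1). split; [apply Rmax_r|]. intros x.
  eapply Rle_trans; [apply HC|]. apply Rmult_le_compat_r; [apply normC_ge0|apply Rmax_l].
Qed.

Let op_bound n : R := proj1_sig (constructive_indefinite_description _ (op_bound_exists n)).

Let op_bound_spec n : 1 <= op_bound n /\ forall x, norm (T n x) <= op_bound n * norm x.
Proof. unfold op_bound. destruct (constructive_indefinite_description _ _) as [C HC]. exact HC. Qed.

Let hump_exists b eps : exists p : nat * V,
  0 < eps -> norm (snd p) <= eps /\ b <= norm (T (fst p) (snd p)).
Proof.
  destruct (Rlt_dec 0 eps) as [Heps|Heps].
  - destruct (large_values b eps Heps) as [n [y Hy]]. exists (n, y). auto.
  - exists (O, zero). intros; lra.
Qed.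

Let hump (k : nat) (st : V * R) : nat * V :=
  proj1_sig (constructive_indefinite_description _
    (hump_exists (bound (fst st) + INR k + 2) (snd st))).

Let hump_spec k st : 0 < snd st ->
  norm (snd (hump k st)) <= snd st /\
  bound (fst st) + INR k + 2 <= norm (T (fst (hump k st)) (snd (hump k st))).
Proof. unfold hump. destruct (constructive_indefinite_description _ _) as [p Hp]. exact Hp. Qed.

Fixpoint hump_seq (k : nat) : V * R :=
  match k with
  | O => (zero, 1)
  | S k => let st := hump_seq k in let p := hump k st in
      (plus (fst st) (snd p), Rmin (snd st / 2) (/ (2 * op_bound (fst p))))
  end.

Let radius_pos k : 0 < snd (hump_seq k).
Proof.
  induction k as [|k IH]; simpl; [lra|]. apply Rmin_pos; [lra|].
  apply Rinv_0_lt_compat. generalize (proj1 (op_bound_spec (fst (hump k (hump_seq k))))). lra.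
Qed.

Let radius_halves k : snd (hump_seq (S k)) <= snd (hump_seq k) / 2.
Proof. apply Rmin_l. Qed.

Let radius_le_pow k : snd (hump_seq k) <= / 2 ^ k.
Proof.
  induction k as [|k IH]; simpl; [lra|].
  eapply Rle_trans; [apply radius_halves|]. rewrite Rinv_mult. lra.
Qed.

Let hump_seq_telescope n m : (n <= m)%nat ->
  norm (minus (fst (hump_seq m)) (fst (hump_seq n))) <= 2 * snd (hump_seq n) - 2 * snd (hump_seq m).
Proof.
  induction 1 as [|m Hnm IH]; [rewrite normC_minus_self; lra|].
  eapply Rle_trans; [apply (normC_triangle_minus _ (fst (hump_seq m)))|].
  simpl fst. rewrite minusC_plus_l.
  generalize (proj1 (hump_spec m (hump_seq m) (radius_pos m))) (radius_halves m). lra.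
Qed.

Lemma gliding_hump_absurd : False.
Proof.
  destruct (limseq_exists (fun k => fst (hump_seq k))) as [x Hx].
  { intros eta Heta. destruct (inv_pow2_small (eta / 2)) as [n0 Hn0]; [lra|].
    exists n0. intros n m Hn Hm. destruct (Nat.le_ge_cases n m) as [H|H].
    - rewrite normC_minus_sym. eapply Rle_trans; [apply hump_seq_telescope, H|].
      generalize (Hn0 n Hn) (radius_le_pow n) (radius_pos m). lra.
    - eapply Rle_trans; [apply hump_seq_telescope, H|].
      generalize (Hn0 m Hm) (radius_le_pow m) (radius_pos n). lra. }
  assert (Htail : forall k, norm (minus x (fst (hump_seq k))) <= 2 * snd (hump_seq k)).
  { intros k. apply (limseq_le _ x _ _ Hx). exists k. intros m Hm.
    eapply Rle_trans; [apply hump_seq_telescope, Hm|]. generalize (radius_pos m). lra. }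
  destruct (INR_unbounded (bound x)) as [k Hkx].
  set (xk := fst (hump_seq k)). set (p := hump k (hump_seq k)).
  set (n := fst p). set (y := snd p).
  assert (Hxk1 : fst (hump_seq (S k)) = plus xk y) by reflexivity.
  destruct (hump_spec k (hump_seq k) (radius_pos k)) as [_ Hbig]. fold xk p n y in Hbig.
  destruct (op_bound_spec n) as [HC1 HC].
  assert (Htail_n : norm (T n (minus x (fst (hump_seq (S k))))) <= 1).
  { eapply Rle_trans; [apply HC|].
    assert (Hr : snd (hump_seq (S k)) <= / (2 * op_bound n)) by apply Rmin_r.
    apply Rle_trans with (op_bound n * (2 * / (2 * op_bound n))).
    - apply Rmult_le_compat_l; [lra|]. generalize (Htail (S k)). lra.
    - right. field. lra. }
  rewrite (linC_minus (T n)) in Htail_n by apply T_linear.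
  assert (Hy : norm (T n y) <= norm (T n (fst (hump_seq (S k)))) + norm (T n xk)).
  { rewrite <- (minusC_plus_l xk y), <- Hxk1, (linC_minus (T n)) by apply T_linear.
    apply normC_minus_le. }
  generalize (normC_ge_minus (T n (fst (hump_seq (S k)))) (T n x)) (bound_spec x n)
    (bound_spec xk n). rewrite normC_minus_sym in Htail_n. lra.
Qed.

End GlidingHump.

Theorem uniform_boundedness : exists C, forall n x, norm (T n x) <= C * norm x.
Proof.
  apply NNPP. intros Hunb.
  exact (gliding_hump_absurd (large_values_of_unbounded_family Hunb)).
Qed.

End UniformBoundedness.

Lemma semigroup_locally_bounded {V : CompleteNormedModule R_AbsRing} (Sg : R -> V -> V) :
  (forall t, 0 <= t -> bounded_linear_map (Sg t)) -> (forall x, Sg 0 x = x) ->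
  (forall x eps, 0 < eps -> exists delta, 0 < delta /\
     forall s, 0 <= s -> Rabs (s - 0) < delta -> norm (minus (Sg s x) (Sg 0 x)) < eps) ->
  exists M d, 0 < d /\ 0 <= M /\ forall r x, 0 <= r <= d -> norm (Sg r x) <= M * norm x.
Proof.
  intros Sg_blin Sg_0 Sg_cont0. apply NNPP. intros Hunb.
  assert (Hbad : forall n : nat, exists r, 0 <= r <= / (INR n + 1) /\
                   exists x, INR n * norm x < norm (Sg r x)).
  { intros n. apply NNPP. intros Hn. apply Hunb. exists (INR n), (/ (INR n + 1)).
    split; [apply Rinv_0_lt_compat; generalize (pos_INR n); lra|].
    split; [apply pos_INR|]. intros r x Hr. apply Rnot_lt_le. intros Hlt.
    apply Hn. exists r. split; [exact Hr|]. exists x. exact Hlt. }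
  set (r := fun n => proj1_sig (constructive_indefinite_description _ (Hbad n))).
  assert (Hr : forall n, 0 <= r n <= / (INR n + 1) /\ exists x, INR n * norm x < norm (Sg (r n) x)).
  { intros n. unfold r. destruct (constructive_indefinite_description _ _) as [s Hs]. exact Hs. }
  destruct (uniform_boundedness (fun n => Sg (r n))) as [C HC].
  - intros n. exact (proj1 (Sg_blin _ (proj1 (proj1 (Hr n))))).
  - intros n. exact (proj2 (Sg_blin _ (proj1 (proj1 (Hr n))))).
  - intros x. destruct (Sg_cont0 x 1 Rlt_0_1) as [d [Hd Hclose]].
    destruct (archimed_cor1 d Hd) as [n0 [Hn0 Hn0pos]].
    destruct (bounded_on_initial_segment (fun n => norm (Sg (r n) x)) n0) as [M HM].
    exists (Rmax M (norm x + 1)). intros n. destruct (Nat.lt_ge_cases n n0) as [Hn|Hn].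
    + eapply Rle_trans; [apply HM, Hn|apply Rmax_l].
    + eapply Rle_trans; [|apply Rmax_r].
      assert (Hrn : r n < d).
      { destruct (Hr n) as [[_ Hrn] _]. eapply Rle_lt_trans; [exact Hrn|].
        eapply Rle_lt_trans; [|exact Hn0].
        apply Rinv_le_contravar; [apply lt_0_INR; lia|].
        apply le_INR in Hn. lra. }
      destruct (Hr n) as [[Hr0 _] _].
      specialize (Hclose (r n) Hr0 ltac:(rewrite Rminus_0_r, Rabs_right; lra)).
      rewrite Sg_0 in Hclose. generalize (normC_ge_minus (Sg (r n) x) x). lra.
  - destruct (INR_unbounded C) as [n HCn].
    destruct (Hr n) as [_ [x Hx]]. specialize (HC n x).
    generalize (normC_ge0 x). nra.
Qed.

Section SingularKernel.
Variables (B N : R) (mu : R -> R).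
Hypothesis HB : 0 <= B.
Hypothesis mu_cont : forall t, 0 < t -> continuity_pt mu t.
Hypothesis mu_pos : forall t, 0 < t -> 0 < mu t.
Hypothesis mu_int : forall t eps, 0 < eps < t ->
  RInt (fun s => mu (t - s) * exp (- B * s)) 0 (t - eps) <= N.

Lemma mu_continuous z : 0 < z -> continuous mu z.
Proof. intros Hz. apply (proj1 (continuity_pt_filterlim mu z)), mu_cont, Hz. Qed.

Lemma ex_RInt_mu a b : 0 < a -> a <= b -> ex_RInt mu a b.
Proof.
  intros Ha Hab. apply (ex_RInt_continuous (V := R_CompleteNormedModule)).
  intros z Hz. rewrite Rmin_left in Hz by lra. apply mu_continuous. lra.
Qed.

Lemma ex_RInt_mu_exp t x : 0 <= x < t -> ex_RInt (fun s => mu (t - s) * exp (- B * s)) 0 x.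
Proof.
  intros Hx. apply (ex_RInt_continuous (V := R_CompleteNormedModule)). intros z Hz.
  rewrite Rmin_left, Rmax_right in Hz by lra.
  apply (continuous_mult (fun s => mu (t - s)) (fun s => exp (- B * s))).
  - apply (continuous_comp (fun s => t - s) mu); [|apply mu_continuous; lra].
    apply (continuous_minus (fun _ => t) (fun s => s));
      [apply continuous_const|apply continuous_id].
  - apply continuous_exp_comp.
    apply (continuous_mult (fun _ => - B) (fun s => s));
      [apply continuous_const|apply continuous_id].
Qed.

Lemma N_nonneg : 0 <= N.
Proof.
  eapply Rle_trans; [|apply (mu_int 2 1); lra].
  apply RInt_ge_0; [lra|apply ex_RInt_mu_exp; lra|]. intros s Hs.
  apply Rmult_le_pos; [apply Rlt_le, mu_pos; lra|apply Rlt_le, exp_pos].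
Qed.

Lemma is_RInt_mu_reflect t x y : 0 < t - y -> t - y <= t - x ->
  is_RInt (fun s => mu (t - s)) x y (RInt mu (t - y) (t - x)).
Proof.
  intros H1 H2.
  assert (I := RInt_correct mu (t - y) (t - x) (ex_RInt_mu _ _ H1 H2)).
  apply is_RInt_swap in I.
  assert (I2 : is_RInt mu (-1 * x + t) (-1 * y + t) (opp (RInt mu (t - y) (t - x))))
    by (replace (-1 * x + t) with (t - x) by ring; replace (-1 * y + t) with (t - y) by ring;
        exact I).
  apply is_RInt_comp_lin, (is_RInt_scal _ _ _ (-1)) in I2.
  replace (RInt mu (t - y) (t - x)) with (scal (-1) (opp (RInt mu (t - y) (t - x))))
    by (change (-1 * - RInt mu (t - y) (t - x) = RInt mu (t - y) (t - x)); ring).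
  eapply is_RInt_ext; [|exact I2].
  intros s _. change (-1 * (-1 * mu (-1 * s + t)) = mu (t - s)).
  replace (-1 * s + t) with (t - s) by ring. ring.
Qed.

(* On [0, 1 - a] the weight e^(-B s) is at least e^(-B). *)
Lemma RInt_mu_bounded a : 0 < a < 1 -> RInt mu a 1 <= N * exp B.
Proof.
  intros Ha.
  assert (I1 := is_RInt_mu_reflect 1 0 (1 - a) ltac:(lra) ltac:(lra)).
  replace (1 - (1 - a)) with a in I1 by ring. replace (1 - 0) with 1 in I1 by ring.
  assert (Hex1 : ex_RInt (fun s => mu (1 - s)) 0 (1 - a)) by (eexists; exact I1).
  assert (Hle : RInt (fun s => exp (- B) * mu (1 - s)) 0 (1 - a)
                <= RInt (fun s => mu (1 - s) * exp (- B * s)) 0 (1 - a)).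
  { apply RInt_le; [lra|exact (ex_RInt_scal _ 0 (1 - a) (exp (- B)) Hex1)|
      apply ex_RInt_mu_exp; lra|].
    intros x Hx. rewrite Rmult_comm. apply Rmult_le_compat_l; [apply Rlt_le, mu_pos; lra|].
    apply exp_le. nra. }
  assert (E : RInt (fun s => exp (- B) * mu (1 - s)) 0 (1 - a) = exp (- B) * RInt mu a 1)
    by (rewrite <- (is_RInt_unique _ _ _ _ I1);
        exact (RInt_scal (fun s => mu (1 - s)) 0 (1 - a) (exp (- B)) Hex1)).
  rewrite E in Hle.
  assert (Hinv : exp B * exp (- B) = 1) by (rewrite <- exp_plus, Rplus_opp_r; apply exp_0).
  replace (RInt mu a 1) with (exp B * (exp (- B) * RInt mu a 1))
    by (rewrite <- Rmult_assoc, Hinv; ring).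
  rewrite (Rmult_comm N). apply Rmult_le_compat_l; [apply Rlt_le, exp_pos|].
  eapply Rle_trans; [exact Hle|]. apply mu_int. exact Ha.
Qed.

(* a |-> int_a^1 mu increases as a decreases to 0 and is bounded, so the tails
   int_a^b mu near 0 are uniformly small. *)
Lemma RInt_mu_small eta : 0 < eta ->
  exists d, 0 < d < 1 /\ forall a b, 0 < a -> a <= b -> b <= d -> RInt mu a b <= eta.
Proof.
  intros Heta.
  set (E := fun x => exists a, 0 < a < 1 /\ x = RInt mu a 1).
  assert (HEb : bound E) by (exists (N * exp B); intros x [a [Ha ->]]; apply RInt_mu_bounded, Ha).
  assert (HEn : exists x, E x) by (exists (RInt mu (1 / 2) 1), (1 / 2); split; [lra|reflexivity]).
  destruct (completeness E HEb HEn) as [m [Hub Hlub]].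
  assert (Hnot : ~ is_upper_bound E (m - eta)) by (intros H; specialize (Hlub _ H); lra).
  apply not_all_ex_not in Hnot. destruct Hnot as [x Hx].
  apply imply_to_and in Hx. destruct Hx as [[a0 [Ha0 ->]] Hx]. apply Rnot_le_lt in Hx.
  exists a0. split; [exact Ha0|]. intros a b Ha Hab Hb.
  assert (C1 : RInt mu a b + RInt mu b 1 = RInt mu a 1)
    by exact (RInt_Chasles mu a b 1 (ex_RInt_mu a b Ha Hab) (ex_RInt_mu b 1 ltac:(lra) ltac:(lra))).
  assert (C2 : RInt mu b a0 + RInt mu a0 1 = RInt mu b 1)
    by exact (RInt_Chasles mu b a0 1 (ex_RInt_mu b a0 ltac:(lra) Hb)
                (ex_RInt_mu a0 1 ltac:(lra) ltac:(lra))).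
  assert (P : 0 <= RInt mu b a0).
  { apply RInt_ge_0; [exact Hb|apply ex_RInt_mu; lra|]. intros z Hz. apply Rlt_le, mu_pos. lra. }
  assert (Ha1 : RInt mu a 1 <= m).
  { destruct (Req_dec a 1) as [->|Hne]; [lra|]. apply Hub. exists a. split; [lra|reflexivity]. }
  lra.
Qed.

Section Duhamel.
Variables (F Fm : CompleteNormedModule R_AbsRing) (iF : F -> Fm)
  (Sm : R -> Fm -> Fm) (SF : R -> F -> F) (SmF : R -> Fm -> F).
Hypothesis iF_blin : bounded_linear_map iF.
Hypothesis iF_inj : forall x y, iF x = iF y -> x = y.
Hypothesis Sm_blin : forall t, 0 <= t -> bounded_linear_map (Sm t).
Hypothesis Sm_0 : forall x, Sm 0 x = x.
Hypothesis Sm_semi : forall t s x, 0 <= t -> 0 <= s -> Sm (t + s) x = Sm t (Sm s x).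
Hypothesis Sm_cont0 : forall x eps, 0 < eps -> exists delta, 0 < delta /\
  forall s, 0 <= s -> Rabs (s - 0) < delta -> norm (minus (Sm s x) (Sm 0 x)) < eps.
Hypothesis HSF : forall t f, 0 <= t -> iF (SF t f) = Sm t (iF f).
Hypothesis HSFc : jointly_continuous_on (fun t => 0 <= t) SF.
Hypothesis HSmF : forall t f, 0 < t -> iF (SmF t f) = Sm t f.
Hypothesis HSmFc : jointly_continuous_on (fun t => 0 < t) SmF.
Hypothesis HestF : forall t (f : F), 0 <= t -> norm (SF t f) <= exp (- B * t) * norm f.
Hypothesis HestFm : forall t (f : Fm), 0 < t -> norm (SmF t f) <= mu t * exp (- B * t) * norm f.

Lemma SF_linear t : 0 <= t -> linear_map (SF t).
Proof.
  intros Ht. destruct (Sm_blin t Ht) as [[Hp Hs] _]. destruct iF_blin as [[Ip Is] _]. split.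
  - intros x y. apply iF_inj. rewrite Ip, !HSF by exact Ht. rewrite Ip. apply Hp.
  - intros a x. apply iF_inj. rewrite Is, !HSF by exact Ht. rewrite Is. apply Hs.
Qed.

Lemma SF_blin t : 0 <= t -> bounded_linear_map (SF t).
Proof.
  intros Ht. split; [apply SF_linear, Ht|]. exists (exp (- B * t)). intros x. apply HestF, Ht.
Qed.

Lemma SmF_linear t : 0 < t -> linear_map (SmF t).
Proof.
  intros Ht. destruct (Sm_blin t (Rlt_le _ _ Ht)) as [[Hp Hs] _].
  destruct iF_blin as [[Ip Is] _]. split.
  - intros x y. apply iF_inj. rewrite Ip, !HSmF by exact Ht. apply Hp.
  - intros a x. apply iF_inj. rewrite Is, !HSmF by exact Ht. apply Hs.
Qed.

Lemma SF_0 x : SF 0 x = x.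
Proof. apply iF_inj. rewrite HSF by lra. apply Sm_0. Qed.

Lemma SmF_semi t h w : 0 < t -> 0 <= h -> SmF (t + h) w = SF h (SmF t w).
Proof.
  intros Ht Hh. apply iF_inj. rewrite HSmF, HSF, HSmF by lra.
  rewrite Rplus_comm. apply Sm_semi; lra.
Qed.

Definition duhamel_integrand (v : R -> Fm) (t s : R) : F := SmF (t - s) (v s).

Lemma duhamel_integrand_continuous v t s :
  (forall z, continuous v z) -> s < t -> continuous (duhamel_integrand v t) s.
Proof.
  intros Hv Hst. apply continuousC_of_eps. intros eps Heps.
  destruct (HSmFc (v s) (t - s) ltac:(simpl; lra) eps Heps) as [d1 [Hd1 H1]].
  destruct (continuousC_eps v s (Hv s) d1 Hd1) as [d2 [Hd2 H2]].
  exists (Rmin (Rmin d1 d2) (t - s)). split; [apply Rmin_pos; [apply Rmin_pos|]; lra|].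
  intros y Hy. apply Rabs_def2 in Hy as Hy'.
  generalize (Rmin_l (Rmin d1 d2) (t - s)) (Rmin_r (Rmin d1 d2) (t - s))
    (Rmin_l d1 d2) (Rmin_r d1 d2). intros.
  apply H1; [simpl; lra|apply H2; lra|].
  replace (t - y - (t - s)) with (- (y - s)) by ring. rewrite Rabs_Ropp. lra.
Qed.

(* The Duhamel integral [int_b^t e^((t-s)A) v(s) ds] with values in F; it is
   improper at s = t, where only the integrable singularity mu(t - s) controls it. *)
Definition duhamel (v : R -> Fm) (b t : R) : F :=
  Lim0 (fun e => RInt (duhamel_integrand v t) b (Rmax b (t - e))).

Section BoundedSource.
Variables (v : R -> Fm) (c : R).
Hypothesis v_cont : forall z, continuous v z.
Hypothesis v_bounded : forall s, 0 <= s -> norm (v s) <= c.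

Let c_nonneg : 0 <= c.
Proof. generalize (normC_ge0 (v 0)) (v_bounded 0 (Rle_refl 0)). lra. Qed.

Lemma duhamel_integrand_RInt_le t x y : 0 <= x -> x <= y -> y < t ->
  ex_RInt (duhamel_integrand v t) x y /\
  norm (RInt (duhamel_integrand v t) x y) <= c * RInt mu (t - y) (t - x).
Proof.
  intros Hx Hxy Hyt.
  assert (Hex : ex_RInt (duhamel_integrand v t) x y).
  { apply ex_RInt_continuous. intros z Hz. rewrite Rmin_left, Rmax_right in Hz by lra.
    apply duhamel_integrand_continuous; [exact v_cont|lra]. }
  split; [exact Hex|].
  apply (norm_RInt_le (duhamel_integrand v t) (fun s => c * mu (t - s)) x y _ _ Hxy);
    [|apply RInt_correct, Hex|
     exact (is_RInt_scal _ x y c _ (is_RInt_mu_reflect t x y ltac:(lra) ltac:(lra)))].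
  intros s Hs. unfold duhamel_integrand. eapply Rle_trans; [apply HestFm; lra|].
  assert (0 < mu (t - s)) by (apply mu_pos; lra).
  assert (exp (- B * (t - s)) <= 1) by (apply exp_nonpos_le1; nra).
  generalize (exp_pos (- B * (t - s))) (v_bounded s ltac:(lra)) (normC_ge0 (v s)). intros.
  apply Rle_trans with (mu (t - s) * norm (v s));
    [|rewrite (Rmult_comm c); apply Rmult_le_compat_l; lra].
  rewrite Rmult_assoc. apply Rmult_le_compat_l; [lra|]. nra.
Qed.

Lemma duhamel_spec b t : 0 <= b -> b <= t ->
  lim0 (fun e => RInt (duhamel_integrand v t) b (Rmax b (t - e))) (duhamel v b t).
Proof.
  intros Hb Hbt. apply Lim0_spec, lim0_exists. intros eta Heta.
  destruct (RInt_mu_small (eta / (c + 1))) as [d [Hd Hmu]];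
    [apply Rdiv_lt_0_compat; generalize c_nonneg; lra|].
  assert (Hc : c * (eta / (c + 1)) <= eta).
  { apply Rle_trans with ((c + 1) * (eta / (c + 1)));
      [apply Rmult_le_compat_r; [apply Rlt_le, Rdiv_lt_0_compat|]; generalize c_nonneg; lra|].
    right. field. generalize c_nonneg. lra. }
  exists d. split; [lra|].
  assert (Hstep : forall x1 x2, b <= x1 -> x1 <= x2 -> x2 < t -> t - x1 < d ->
            norm (minus (RInt (duhamel_integrand v t) b x1)
                        (RInt (duhamel_integrand v t) b x2)) <= eta).
  { intros x1 x2 Hbx1 H12 Hx2t Hx1t.
    destruct (duhamel_integrand_RInt_le t b x1 Hb Hbx1 ltac:(lra)) as [E1 _].
    destruct (duhamel_integrand_RInt_le t x1 x2 ltac:(lra) H12 Hx2t) as [E2 N2].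
    rewrite normC_minus_sym, RInt_minus_Chasles by assumption.
    eapply Rle_trans; [exact N2|]. eapply Rle_trans; [|exact Hc].
    apply Rmult_le_compat_l; [exact c_nonneg|]. apply Hmu; lra. }
  intros e e' He He'.
  assert (Hends : forall e0, 0 < e0 < d -> b <= Rmax b (t - e0) /\
            t - Rmax b (t - e0) < d /\ (b < Rmax b (t - e0) -> Rmax b (t - e0) < t)).
  { intros e0 He0. split; [apply Rmax_l|]. split; [generalize (Rmax_r b (t - e0)); lra|].
    unfold Rmax. destruct (Rle_dec b (t - e0)); lra. }
  destruct (Hends e He) as [H1 [H2 H3]], (Hends e' He') as [H1' [H2' H3']].
  destruct (Req_dec (Rmax b (t - e)) (Rmax b (t - e'))) as [Heq|Hne].
  - rewrite Heq, normC_minus_self. lra.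
  - destruct (Rle_dec (Rmax b (t - e)) (Rmax b (t - e'))).
    + apply Hstep; lra.
    + rewrite normC_minus_sym. apply Hstep; lra.
Qed.

Lemma duhamel_short_le b t eta d : 0 < eta ->
  (forall a b', 0 < a -> a <= b' -> b' <= d -> RInt mu a b' <= eta) ->
  0 <= b -> b <= t -> t - b <= d -> norm (duhamel v b t) <= c * eta.
Proof.
  intros Heta Hmu Hb Hbt Htb.
  apply (lim0_norm_le _ _ _ (duhamel_spec b t Hb Hbt)).
  exists 1. split; [lra|]. intros e He.
  destruct (Rle_dec (t - e) b) as [H|H].
  - rewrite Rmax_left by lra. rewrite RInt_point, normC_zero.
    generalize c_nonneg. nra.
  - rewrite Rmax_right by lra.
    destruct (duhamel_integrand_RInt_le t b (t - e) Hb ltac:(lra) ltac:(lra)) as [_ Hn].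
    eapply Rle_trans; [exact Hn|]. apply Rmult_le_compat_l; [exact c_nonneg|].
    replace (t - (t - e)) with e by ring. apply Hmu; lra.
Qed.

Lemma duhamel_empty t : 0 <= t -> duhamel v t t = zero.
Proof.
  intros Ht. apply (lim0_unique _ _ _ (duhamel_spec t t Ht (Rle_refl t))).
  eapply lim0_ext; [|apply lim0_const].
  exists 1. split; [lra|]. intros e He. rewrite Rmax_left by lra. symmetry. apply RInt_point.
Qed.

Lemma duhamel_split b t : 0 <= b -> b <= t ->
  duhamel v 0 t = plus (SF (t - b) (duhamel v 0 b)) (duhamel v b t).
Proof.
  intros Hb Hbt. destruct (Req_dec b t) as [<-|Hne].
  { rewrite (duhamel_empty b Hb), Rminus_eq_0, SF_0. symmetry. apply plus_zero_r. }
  assert (Hhead : duhamel v 0 t = plus (RInt (duhamel_integrand v t) 0 b) (duhamel v b t)).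
  { apply (lim0_unique _ _ _ (duhamel_spec 0 t (Rle_refl 0) ltac:(lra))).
    eapply lim0_ext; [|apply lim0_plus; [apply lim0_const|apply (duhamel_spec b t Hb Hbt)]].
    exists (t - b). split; [lra|]. intros e He. rewrite !Rmax_right by lra.
    apply RInt_Chasles.
    - exact (proj1 (duhamel_integrand_RInt_le t 0 b (Rle_refl 0) Hb ltac:(lra))).
    - exact (proj1 (duhamel_integrand_RInt_le t b (t - e) Hb ltac:(lra) ltac:(lra))). }
  rewrite Hhead. f_equal.
  destruct (Req_dec b 0) as [->|Hb0].
  { rewrite RInt_point, (duhamel_empty 0 (Rle_refl 0)). symmetry. apply linC_zero, SF_linear. lra. }
  apply (lim0_unique (fun e => RInt (duhamel_integrand v t) 0 (Rmax 0 (b - e)))).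
  { apply RInt_upper_lim0; [lra|]. intros z Hz.
    apply duhamel_integrand_continuous; [exact v_cont|lra]. }
  eapply lim0_ext; [|apply lim0_bounded_linear_map;
                       [apply (SF_blin (t - b)); lra|apply (duhamel_spec 0 b (Rle_refl 0) Hb)]].
  exists b. split; [lra|]. intros e He. rewrite Rmax_right by lra.
  assert (Hex := proj1 (duhamel_integrand_RInt_le b 0 (b - e) (Rle_refl 0) ltac:(lra) ltac:(lra))).
  rewrite <- (is_RInt_unique _ _ _ _ (is_RInt_bounded_linear_map (SF (t - b)) _ 0 (b - e) _
                (SF_blin (t - b) ltac:(lra)) (RInt_correct _ _ _ Hex))).
  apply RInt_ext. intros s Hs. rewrite Rmin_left, Rmax_right in Hs by lra.
  unfold duhamel_integrand. rewrite <- SmF_semi by lra. f_equal. ring.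
Qed.

(* Split at b just below t: the part up to b moves continuously with the semigroup
   on F, and the short remainder is small uniformly by integrability of mu at 0. *)
Lemma duhamel_continuous t : 0 <= t ->
  forall eps, 0 < eps -> exists delta, 0 < delta /\ forall s, 0 <= s -> Rabs (s - t) < delta ->
    norm (minus (duhamel v 0 s) (duhamel v 0 t)) < eps.
Proof.
  intros Ht eps Heps.
  set (eta := eps / (3 * (c + 1))).
  assert (Heta : 0 < eta) by (unfold eta; apply Rdiv_lt_0_compat; generalize c_nonneg; lra).
  assert (Hceta : c * eta < eps / 3).
  { unfold eta. apply Rlt_le_trans with ((c + 1) * (eps / (3 * (c + 1)))).
    - apply Rmult_lt_compat_r; [apply Rdiv_lt_0_compat|]; generalize c_nonneg; lra.
    - right. field. generalize c_nonneg. lra. }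
  destruct (RInt_mu_small eta Heta) as [d [Hd Hmu]].
  set (b := Rmax 0 (t - d / 2)).
  assert (Hb0 : 0 <= b) by apply Rmax_l.
  assert (Hbt : b <= t) by (unfold b; apply Rmax_lub; lra).
  assert (Htb : t - b <= d / 2) by (unfold b; generalize (Rmax_r 0 (t - d / 2)); lra).
  destruct (HSFc (duhamel v 0 b) (t - b) ltac:(simpl; lra) (eps / 3) ltac:(lra)) as [d1 [Hd1 H1]].
  exists (Rmin d1 (d / 2)). split; [apply Rmin_pos; lra|].
  intros s Hs Hst. generalize (Rmin_l d1 (d / 2)) (Rmin_r d1 (d / 2)). intros.
  apply Rabs_def2 in Hst.
  assert (Hbs : b <= s) by (unfold b; apply Rmax_lub; lra).
  assert (Hsb : s - b <= d) by (unfold b, Rmax; destruct (Rle_dec 0 (t - d / 2)); lra).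
  rewrite (duhamel_split b s Hb0 Hbs), (duhamel_split b t Hb0 Hbt), minusC_plus_plus.
  eapply Rle_lt_trans; [apply normC_triangle|].
  assert (A1 : norm (minus (SF (s - b) (duhamel v 0 b)) (SF (t - b) (duhamel v 0 b))) < eps / 3).
  { apply H1; [simpl; lra|rewrite norm_minus_self; exact Hd1|].
    replace (s - b - (t - b)) with (s - t) by ring. apply Rabs_def1; lra. }
  assert (A2 : norm (duhamel v b s) <= c * eta) by (apply (duhamel_short_le b s eta d); auto; lra).
  assert (A3 : norm (duhamel v b t) <= c * eta) by (apply (duhamel_short_le b t eta d); auto; lra).
  generalize (normC_minus_le (duhamel v b s) (duhamel v b t)). lra.
Qed.

(* Continuity at the endpoint s = t needs a bound on e^(rA) uniform in small r. *)
Lemma semigroup_integrand_continuous_at_end t :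
  continuous (fun s => Sm (Rmax 0 (t - s)) (v s)) t.
Proof.
  destruct (semigroup_locally_bounded Sm Sm_blin Sm_0 Sm_cont0) as [M [d [Hd [HM HMb]]]].
  apply continuousC_of_eps. intros eps Heps.
  destruct (continuousC_eps v t (v_cont t) (eps / (2 * (M + 1)))) as [d1 [Hd1 H1]];
    [apply Rdiv_lt_0_compat; lra|].
  destruct (Sm_cont0 (v t) (eps / 2) ltac:(lra)) as [d2 [Hd2 H2]].
  exists (Rmin (Rmin d1 d2) d). split; [apply Rmin_pos; [apply Rmin_pos|]; lra|].
  intros y Hy. apply Rabs_def2 in Hy as Hy'.
  generalize (Rmin_l (Rmin d1 d2) d) (Rmin_r (Rmin d1 d2) d) (Rmin_l d1 d2) (Rmin_r d1 d2). intros.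
  rewrite Rminus_eq_0, (Rmax_left 0 0) by lra.
  set (r := Rmax 0 (t - y)).
  assert (Hr : 0 <= r <= d /\ r < d2) by (unfold r, Rmax; destruct (Rle_dec 0 (t - y)); lra).
  rewrite (minus_trans (Sm r (v t))).
  eapply Rle_lt_trans; [apply normC_triangle|].
  rewrite <- linC_minus by (apply Sm_blin; lra).
  assert (A1 : norm (Sm r (minus (v y) (v t))) < eps / 2).
  { eapply Rle_lt_trans; [apply HMb; lra|].
    assert (norm (minus (v y) (v t)) < eps / (2 * (M + 1))) by (apply H1; lra).
    apply Rle_lt_trans with (M * (eps / (2 * (M + 1)))); [apply Rmult_le_compat_l; lra|].
    apply Rlt_le_trans with ((M + 1) * (eps / (2 * (M + 1)))).
    - apply Rmult_lt_compat_r; [apply Rdiv_lt_0_compat|]; lra.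
    - right. field. lra. }
  assert (A2 : norm (minus (Sm r (v t)) (Sm 0 (v t))) < eps / 2).
  { apply H2; [lra|]. rewrite Rminus_0_r, Rabs_right; lra. }
  lra.
Qed.

Lemma is_RInt_duhamel t : 0 < t ->
  is_RInt (fun s => Sm (Rmax 0 (t - s)) (v s)) 0 t (iF (duhamel v 0 t)).
Proof.
  intros Ht. set (h := fun s => Sm (Rmax 0 (t - s)) (v s)).
  assert (Hhg : forall s, s < t -> h s = iF (duhamel_integrand v t s)).
  { intros s Hs. unfold h, duhamel_integrand. rewrite Rmax_right by lra.
    symmetry. apply HSmF. lra. }
  assert (Hh : forall z, 0 <= z <= t -> continuous h z).
  { intros z Hz. destruct (Req_dec z t) as [->|Hzt]; [apply semigroup_integrand_continuous_at_end|].
    apply (continuous_ext_loc _ (fun s => iF (duhamel_integrand v t s))).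
    - exists (mkposreal (t - z) ltac:(lra)). intros y Hy. symmetry. apply Hhg.
      change (Rabs (y - z) < t - z) in Hy. apply Rabs_def2 in Hy. lra.
    - apply (continuous_comp (duhamel_integrand v t) iF).
      + apply duhamel_integrand_continuous; [exact v_cont|lra].
      + exact (bounded_linear_map_continuous iF _ iF_blin). }
  assert (Hex : ex_RInt h 0 t).
  { apply ex_RInt_continuous. intros z Hz. rewrite Rmin_left, Rmax_right in Hz by lra.
    apply Hh, Hz. }
  replace (iF (duhamel v 0 t)) with (RInt h 0 t); [apply RInt_correct, Hex|].
  apply (lim0_unique (fun e => RInt h 0 (Rmax 0 (t - e))));
    [apply RInt_upper_lim0; [lra|exact Hh]|].
  eapply lim0_ext; [|apply lim0_bounded_linear_map; [exact iF_blin|apply duhamel_spec; lra]].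
  exists t. split; [lra|]. intros e He. rewrite Rmax_right by lra.
  assert (Hex2 := proj1 (duhamel_integrand_RInt_le t 0 (t - e) (Rle_refl 0) ltac:(lra) ltac:(lra))).
  rewrite <- (is_RInt_unique _ _ _ _ (is_RInt_bounded_linear_map iF _ 0 (t - e) _ iF_blin
                                       (RInt_correct _ _ _ Hex2))).
  apply RInt_ext. intros s Hs. rewrite Rmin_left, Rmax_right in Hs by lra.
  symmetry. apply Hhg. lra.
Qed.

End BoundedSource.

Lemma duhamel_decay v c t : (forall z, continuous v z) -> 0 <= c ->
  (forall s, 0 <= s -> norm (v s) <= c * exp (- 2 * B * s)) -> 0 <= t ->
  norm (duhamel v 0 t) <= c * N * exp (- B * t).
Proof.
  intros Hv Hc0 Hc Ht.
  assert (Hc' : forall s, 0 <= s -> norm (v s) <= c).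
  { intros s Hs. eapply Rle_trans; [apply Hc, Hs|].
    assert (exp (- 2 * B * s) <= 1) by (apply exp_nonpos_le1; nra). nra. }
  apply (lim0_norm_le _ _ _ (duhamel_spec v c Hv Hc' 0 t (Rle_refl 0) Ht)).
  generalize (exp_pos (- B * t)) N_nonneg. intros HE HN.
  exists 1. split; [lra|]. intros e He.
  destruct (Rle_dec (t - e) 0) as [H|H].
  { rewrite Rmax_left, RInt_point, normC_zero by lra.
    apply Rmult_le_pos; [apply Rmult_le_pos|]; lra. }
  rewrite Rmax_right by lra.
  destruct (duhamel_integrand_RInt_le v c Hv Hc' t 0 (t - e) (Rle_refl 0) ltac:(lra) ltac:(lra))
    as [Hex _].
  assert (Hm := ex_RInt_mu_exp t (t - e) ltac:(lra)).
  apply Rle_trans with (c * exp (- B * t) * RInt (fun s => mu (t - s) * exp (- B * s)) 0 (t - e)).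
  - apply (norm_RInt_le (duhamel_integrand v t)
             (fun s => c * exp (- B * t) * (mu (t - s) * exp (- B * s))) 0 (t - e));
      [lra| |apply RInt_correct, Hex|exact (is_RInt_scal _ _ _ _ _ (RInt_correct _ _ _ Hm))].
    intros s Hs. unfold duhamel_integrand. eapply Rle_trans; [apply HestFm; lra|].
    assert (0 < mu (t - s)) by (apply mu_pos; lra).
    assert (0 < exp (- B * (t - s))) by apply exp_pos.
    assert (E : exp (- B * (t - s)) * exp (- 2 * B * s) = exp (- B * t) * exp (- B * s))
      by (rewrite <- !exp_plus; f_equal; ring).
    apply Rle_trans with (mu (t - s) * exp (- B * (t - s)) * (c * exp (- 2 * B * s))).
    + apply Rmult_le_compat_l; [apply Rmult_le_pos; lra|apply Hc; lra].
    + right. transitivity (mu (t - s) * c * (exp (- B * (t - s)) * exp (- 2 * B * s))); [ring|].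
      rewrite E. ring.
  - replace (c * N * exp (- B * t)) with (c * exp (- B * t) * N) by ring.
    apply Rmult_le_compat_l; [apply Rmult_le_pos; lra|]. apply mu_int. lra.
Qed.

Lemma duhamel_minus v1 v2 c1 c2 t : (forall z, continuous v1 z) -> (forall z, continuous v2 z) ->
  (forall s, 0 <= s -> norm (v1 s) <= c1) -> (forall s, 0 <= s -> norm (v2 s) <= c2) -> 0 <= t ->
  duhamel (fun s => minus (v1 s) (v2 s)) 0 t = minus (duhamel v1 0 t) (duhamel v2 0 t).
Proof.
  intros Hv1 Hv2 Hc1 Hc2 Ht.
  assert (Hv : forall z, continuous (fun s => minus (v1 s) (v2 s)) z)
    by (intros z; apply (continuous_minus v1 v2); auto).
  assert (Hc : forall s, 0 <= s -> norm (minus (v1 s) (v2 s)) <= c1 + c2).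
  { intros s Hs. eapply Rle_trans; [apply normC_minus_le|]. generalize (Hc1 s Hs) (Hc2 s Hs). lra. }
  apply (lim0_unique _ _ _ (duhamel_spec _ _ Hv Hc 0 t (Rle_refl 0) Ht)).
  eapply lim0_ext; [|apply lim0_minus; [apply (duhamel_spec v1 c1)|apply (duhamel_spec v2 c2)];
                     auto; lra].
  exists 1. split; [lra|]. intros e He.
  assert (Hex : forall v c, (forall z, continuous v z) -> (forall s, 0 <= s -> norm (v s) <= c) ->
            ex_RInt (duhamel_integrand v t) 0 (Rmax 0 (t - e))).
  { intros v c Hv' Hc'. unfold Rmax. destruct (Rle_dec 0 (t - e)).
    - exact (proj1 (duhamel_integrand_RInt_le v c Hv' Hc' t 0 (t - e) (Rle_refl 0) r ltac:(lra))).
    - exists zero. apply is_RInt_point. }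
  rewrite <- RInt_minus by (eapply Hex; eauto).
  apply RInt_ext. intros s Hs. rewrite Rmin_left, Rmax_right in Hs by apply Rmax_l.
  unfold duhamel_integrand. symmetry. apply linC_minus, SmF_linear.
  generalize (Rmax_r 0 (t - e)). unfold Rmax in Hs |- *. destruct (Rle_dec 0 (t - e)); lra.
Qed.


Section Picard.
Variables (Pq : F -> F -> Fm) (xi : R -> Fm) (f0 : F) (K J : R).
Hypothesis HPbil : is_bilinear Pq.
Hypothesis HK : 0 < K.
Hypothesis HPbnd : forall f g, norm (Pq f g) <= K * norm f * norm g.
Hypothesis Hxi_lip : locally_lipschitz_nonneg xi.
Hypothesis HJ : 0 <= J.
Hypothesis Hxi_bnd : forall t, 0 <= t -> norm (xi t) <= J * exp (- 2 * B * t).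
Hypothesis Hsmall : 4 * K * N * (norm f0 + N * J) <= 1.

Local Notation F0 := (norm f0 + N * J).
Local Notation Rstar := (F0 * Xfun (4 * K * N * F0)).

Definition decay_bound (phi : R -> F) (r : R) : Prop :=
  forall s, 0 <= s -> norm (phi s) <= r * exp (- B * s).

(* Iterates live on all of R (constant for t <= 0), so that continuity is plain
   continuity; [xi] is extended in the same way. *)
Definition xi_ext (s : R) : Fm := xi (Rmax 0 s).

Definition nonlinearity (phi : R -> F) (s : R) : Fm := plus (Pq (phi s) (phi s)) (xi_ext s).

Definition picard_map (phi : R -> F) (t : R) : F :=
  plus (SF (Rmax 0 t) f0) (duhamel (nonlinearity phi) 0 (Rmax 0 t)).

Lemma xi_ext_continuous z : continuous xi_ext z.
Proof.
  apply continuousC_of_eps. intros eps Heps.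
  destruct (Hxi_lip (Rmax 0 z + 1)) as [L HL]; [generalize (Rmax_l 0 z); lra|].
  set (L' := Rabs L + 1).
  assert (HL' : 0 < L') by (unfold L'; generalize (Rabs_pos L); lra).
  exists (Rmin 1 (eps / L')). split; [apply Rmin_pos; [lra|apply Rdiv_lt_0_compat; lra]|].
  intros y Hy. generalize (Rmin_l 1 (eps / L')) (Rmin_r 1 (eps / L')) (Rmax0_lipschitz y z)
    (Rmax_l 0 y) (Rmax_l 0 z) (Rabs_pos (Rmax 0 y - Rmax 0 z)) (RRle_abs L). intros.
  assert (Hpy : Rmax 0 y <= Rmax 0 z + 1).
  { assert (Hyz : Rabs (Rmax 0 y - Rmax 0 z) < 1) by lra. apply Rabs_def2 in Hyz. lra. }
  unfold xi_ext. eapply Rle_lt_trans; [apply HL; lra|].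
  apply Rle_lt_trans with (L' * Rabs (y - z)).
  - apply Rle_trans with (L' * Rabs (Rmax 0 y - Rmax 0 z));
      [apply Rmult_le_compat_r; unfold L' in *; lra|apply Rmult_le_compat_l; lra].
  - apply Rlt_le_trans with (L' * (eps / L')); [apply Rmult_lt_compat_l; lra|].
    right; field; lra.
Qed.

Lemma Pq_diag_minus_le a b :
  norm (minus (Pq a a) (Pq b b)) <= K * norm (minus a b) * (norm a + norm b).
Proof.
  rewrite (minus_trans (Pq b a)).
  rewrite <- (linC_minus (fun x => Pq x a)) by exact (proj1 HPbil a).
  rewrite <- (linC_minus (fun y => Pq b y)) by exact (proj2 HPbil b).
  eapply Rle_trans; [apply normC_triangle|].
  generalize (HPbnd (minus a b) a) (HPbnd b (minus a b)). lra.
Qed.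

Lemma nonlinearity_continuous phi :
  (forall z, continuous phi z) -> forall z, continuous (nonlinearity phi) z.
Proof.
  intros Hphi z. apply (continuous_plus (fun s => Pq (phi s) (phi s)) xi_ext);
    [|apply xi_ext_continuous].
  apply continuousC_of_eps. intros eps Heps.
  set (M := norm (phi z)).
  set (D := K * (2 * M + 1) + 1).
  assert (HM : 0 <= M) by apply normC_ge0.
  assert (HD : 0 < D) by (unfold D; nra).
  destruct (continuousC_eps phi z (Hphi z) (Rmin 1 (eps / D))) as [d [Hd H]];
    [apply Rmin_pos; [lra|apply Rdiv_lt_0_compat; lra]|].
  exists d. split; [exact Hd|]. intros y Hy. specialize (H y Hy).
  generalize (Rmin_l 1 (eps / D)) (Rmin_r 1 (eps / D)) (normC_ge_minus (phi y) (phi z))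
    (normC_ge0 (minus (phi y) (phi z))). intros.
  eapply Rle_lt_trans; [apply Pq_diag_minus_le|].
  apply Rle_lt_trans with (K * norm (minus (phi y) (phi z)) * (2 * M + 1)).
  - apply Rmult_le_compat_l; [apply Rmult_le_pos; lra|]. unfold M in *. lra.
  - apply Rle_lt_trans with (norm (minus (phi y) (phi z)) * D); [unfold D; nra|].
    apply Rlt_le_trans with ((eps / D) * D); [apply Rmult_lt_compat_r; lra|].
    right; field; lra.
Qed.

Lemma exp_2B s : exp (- 2 * B * s) = exp (- B * s) * exp (- B * s).
Proof. rewrite <- exp_plus. f_equal. ring. Qed.

Lemma nonlinearity_decay phi r : 0 <= r -> decay_bound phi r ->
  forall s, 0 <= s -> norm (nonlinearity phi s) <= (K * r ^ 2 + J) * exp (- 2 * B * s).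
Proof.
  intros Hr Hphi s Hs. unfold nonlinearity, xi_ext. rewrite Rmax_right by exact Hs.
  eapply Rle_trans; [apply normC_triangle|].
  generalize (HPbnd (phi s) (phi s)) (Hphi s Hs) (Hxi_bnd s Hs) (normC_ge0 (phi s)).
  rewrite exp_2B. intros. assert (0 < exp (- B * s)) by apply exp_pos.
  assert (norm (phi s) * norm (phi s) <= (r * exp (- B * s)) * (r * exp (- B * s)))
    by (apply Rmult_le_compat; lra).
  nra.
Qed.

Lemma nonlinearity_bounded phi r : 0 <= r -> decay_bound phi r ->
  forall s, 0 <= s -> norm (nonlinearity phi s) <= K * r ^ 2 + J.
Proof.
  intros Hr Hphi s Hs. eapply Rle_trans; [apply (nonlinearity_decay phi r Hr Hphi s Hs)|].
  assert (exp (- 2 * B * s) <= 1) by (apply exp_nonpos_le1; nra).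
  assert (0 <= K * r ^ 2 + J) by (generalize (pow2_ge_0 r); nra).
  generalize (exp_pos (- 2 * B * s)). nra.
Qed.

Lemma nonlinearity_minus_decay phi psi D R1 R2 :
  decay_bound (fun s => minus (phi s) (psi s)) D -> decay_bound phi R1 -> decay_bound psi R2 ->
  forall s, 0 <= s ->
    norm (minus (nonlinearity phi s) (nonlinearity psi s)) <= K * D * (R1 + R2) * exp (- 2 * B * s).
Proof.
  intros HD H1 H2 s Hs. unfold nonlinearity. rewrite minusC_plus_r.
  eapply Rle_trans; [apply Pq_diag_minus_le|].
  generalize (HD s Hs) (H1 s Hs) (H2 s Hs) (normC_ge0 (minus (phi s) (psi s)))
    (normC_ge0 (phi s)) (normC_ge0 (psi s)). intros.
  rewrite exp_2B. assert (0 < exp (- B * s)) by apply exp_pos.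
  apply Rle_trans with (K * (D * exp (- B * s)) * (R1 * exp (- B * s) + R2 * exp (- B * s)));
    [|right; ring].
  apply Rmult_le_compat; [apply Rmult_le_pos| |apply Rmult_le_compat_l|]; lra.
Qed.

Lemma picard_map_continuous phi r : (forall z, continuous phi z) -> 0 <= r -> decay_bound phi r ->
  forall z, continuous (picard_map phi) z.
Proof.
  intros Hc Hr Hb z.
  apply (continuous_plus (fun t => SF (Rmax 0 t) f0)
                         (fun t => duhamel (nonlinearity phi) 0 (Rmax 0 t))).
  - apply continuousC_of_eps. intros eps Heps.
    destruct (HSFc f0 (Rmax 0 z) (Rmax_l 0 z) eps Heps) as [d [Hd H]].
    exists d. split; [exact Hd|]. intros y Hy.
    apply H; [apply Rmax_l|rewrite norm_minus_self; exact Hd|].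
    eapply Rle_lt_trans; [apply Rmax0_lipschitz|exact Hy].
  - apply continuousC_of_eps. intros eps Heps.
    destruct (duhamel_continuous (nonlinearity phi) _ (nonlinearity_continuous phi Hc)
      (nonlinearity_bounded phi r Hr Hb) (Rmax 0 z) (Rmax_l 0 z) eps Heps) as [d [Hd H]].
    exists d. split; [exact Hd|]. intros y Hy. apply H; [apply Rmax_l|].
    eapply Rle_lt_trans; [apply Rmax0_lipschitz|exact Hy].
Qed.

Lemma picard_map_decay phi r : (forall z, continuous phi z) -> 0 <= r -> decay_bound phi r ->
  decay_bound (picard_map phi) (F0 + K * N * r ^ 2).
Proof.
  intros Hc Hr Hb t Ht. unfold picard_map. rewrite Rmax_right by exact Ht.
  eapply Rle_trans; [apply normC_triangle|].
  assert (HcK : 0 <= K * r ^ 2 + J) by (generalize (pow2_ge_0 r); nra).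
  generalize (HestF t f0 Ht) (duhamel_decay (nonlinearity phi) (K * r ^ 2 + J) t
    (nonlinearity_continuous phi Hc) HcK (nonlinearity_decay phi r Hr Hb) Ht).
  intros. apply Rle_trans with (exp (- B * t) * norm f0 + (K * r ^ 2 + J) * N * exp (- B * t));
    [lra|right; ring].
Qed.

Lemma picard_map_minus_decay phi psi R1 R2 D :
  (forall z, continuous phi z) -> (forall z, continuous psi z) -> 0 <= R1 -> 0 <= R2 -> 0 <= D ->
  decay_bound phi R1 -> decay_bound psi R2 -> decay_bound (fun s => minus (phi s) (psi s)) D ->
  decay_bound (fun t => minus (picard_map phi t) (picard_map psi t)) (K * D * (R1 + R2) * N).
Proof.
  intros Hc1 Hc2 HR1 HR2 HD Hb1 Hb2 Hd t Ht. unfold picard_map. rewrite Rmax_right by exact Ht.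
  rewrite normC_minus_plus_l.
  rewrite <- (duhamel_minus _ _ _ _ t
                (nonlinearity_continuous phi Hc1) (nonlinearity_continuous psi Hc2)
                (nonlinearity_bounded phi R1 HR1 Hb1) (nonlinearity_bounded psi R2 HR2 Hb2) Ht).
  apply duhamel_decay; [| |apply nonlinearity_minus_decay; auto|exact Ht].
  - intros z. apply (continuous_minus (nonlinearity phi) (nonlinearity psi));
      apply nonlinearity_continuous; auto.
  - apply Rmult_le_pos; [apply Rmult_le_pos|]; lra.
Qed.

Fixpoint picard_radius (n : nat) : R :=
  match n with O => 0 | S k => F0 + K * N * picard_radius k ^ 2 end.

Lemma F0_nonneg : 0 <= F0.
Proof. generalize (normC_ge0 f0) N_nonneg. nra. Qed.

Lemma picard_radius_le_fixed n : 0 <= picard_radius n <= Rstar.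
Proof.
  destruct (Xfun_fixed_point K N F0 (Rlt_le _ _ HK) N_nonneg F0_nonneg Hsmall) as [HR0 HReq].
  assert (HKN : 0 <= K * N) by (generalize N_nonneg; nra).
  induction n as [|n IH]; simpl; [lra|]. split.
  - generalize F0_nonneg (pow2_ge_0 (picard_radius n)). nra.
  - rewrite HReq. assert (picard_radius n ^ 2 <= Rstar ^ 2) by (apply pow_incr; lra).
    nra.
Qed.

Lemma picard_radius_incr n : picard_radius n <= picard_radius (S n).
Proof.
  assert (HKN : 0 <= K * N) by (generalize N_nonneg; nra).
  induction n as [|n IH].
  - simpl. generalize F0_nonneg. nra.
  - assert (picard_radius n ^ 2 <= picard_radius (S n) ^ 2)
      by (apply pow_incr; split; [apply picard_radius_le_fixed|exact IH]).
    change (F0 + K * N * picard_radius n ^ 2 <= F0 + K * N * picard_radius (S n) ^ 2). nra.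
Qed.

Lemma picard_radius_le n m : (n <= m)%nat -> picard_radius n <= picard_radius m.
Proof. induction 1; [lra|]. generalize (picard_radius_incr m). lra. Qed.

Lemma picard_radius_has_ub : has_ub picard_radius.
Proof. exists Rstar. intros x [n ->]. apply picard_radius_le_fixed. Qed.

Definition radius_lim : R :=
  proj1_sig (growing_cv picard_radius picard_radius_incr picard_radius_has_ub).

Lemma picard_radius_cv : Un_cv picard_radius radius_lim.
Proof. exact (proj2_sig (growing_cv _ _ _)). Qed.

Lemma picard_radius_le_lim n : picard_radius n <= radius_lim.
Proof. apply growing_ineq; [exact picard_radius_incr|exact picard_radius_cv]. Qed.

Lemma radius_lim_nonneg : 0 <= radius_lim.
Proof. apply (Rle_trans _ _ _ (proj1 (picard_radius_le_fixed 0))), picard_radius_le_lim. Qed.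

Lemma radius_lim_le_fixed : radius_lim <= Rstar.
Proof.
  apply (Rle_cv_lim (Un := picard_radius) (Vn := fun _ => Rstar));
    [apply picard_radius_le_fixed|exact picard_radius_cv|].
  intros eps Heps. exists O. intros n _. unfold Rdist. rewrite Rminus_eq_0, Rabs_R0. exact Heps.
Qed.

Lemma radius_gap_small eta : 0 < eta ->
  exists n0, forall n, (n0 <= n)%nat -> radius_lim - picard_radius n < eta.
Proof.
  intros Heta. destruct (picard_radius_cv eta Heta) as [n0 Hn0]. exists n0. intros n Hn.
  specialize (Hn0 n Hn). unfold Rdist in Hn0. apply Rabs_def2 in Hn0. lra.
Qed.

Fixpoint picard_iter (n : nat) : R -> F :=
  match n with O => fun _ => zero | S k => picard_map (picard_iter k) end.

Lemma picard_iter_regular n :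
  (forall z, continuous (picard_iter n) z) /\ decay_bound (picard_iter n) (picard_radius n).
Proof.
  induction n as [|n [IHc IHb]]; simpl.
  - split; [intros z; apply continuous_const|]. intros t Ht. rewrite normC_zero.
    generalize (exp_pos (- B * t)). lra.
  - destruct (picard_radius_le_fixed n) as [H0 _]. split.
    + exact (picard_map_continuous _ _ IHc H0 IHb).
    + exact (picard_map_decay _ _ IHc H0 IHb).
Qed.

(* R_(n+2) - R_(n+1) = K N (R_(n+1) - R_n) (R_(n+1) + R_n) is exactly the factor of
   [picard_map_minus_decay], so the differences of iterates telescope along the radii. *)
Lemma picard_iter_step_le n :
  decay_bound (fun t => minus (picard_iter (S n) t) (picard_iter n t))
    (picard_radius (S n) - picard_radius n).
Proof.
  induction n as [|n IH]; intros t Ht.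
  - replace (minus (picard_iter 1 t) (picard_iter 0 t)) with (picard_iter 1 t)
      by (symmetry; exact (minusC_zero_r (picard_iter 1 t))).
    replace (picard_radius 1 - picard_radius 0) with (picard_radius 1) by (simpl; ring).
    apply (proj2 (picard_iter_regular 1)), Ht.
  - destruct (picard_iter_regular (S n)) as [C1 B1]. destruct (picard_iter_regular n) as [C2 B2].
    destruct (picard_radius_le_fixed (S n)) as [R1 _].
    destruct (picard_radius_le_fixed n) as [R2 _].
    assert (HD : 0 <= picard_radius (S n) - picard_radius n)
      by (generalize (picard_radius_incr n); lra).
    eapply Rle_trans; [exact (picard_map_minus_decay _ _ _ _ _ C1 C2 R1 R2 HD B1 B2 IH t Ht)|].
    right. simpl. ring.
Qed.

Lemma picard_iter_cauchy n m t : (n <= m)%nat -> 0 <= t ->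
  norm (minus (picard_iter m t) (picard_iter n t))
    <= (picard_radius m - picard_radius n) * exp (- B * t).
Proof.
  intros Hnm Ht. induction Hnm as [|m Hnm IH]; [rewrite normC_minus_self; lra|].
  eapply Rle_trans; [apply (normC_triangle_minus _ (picard_iter m t))|].
  generalize (picard_iter_step_le m t Ht). lra.
Qed.

Lemma picard_iter_Rmax0 n t : picard_iter n (Rmax 0 t) = picard_iter n t.
Proof. destruct n; [reflexivity|]. simpl. unfold picard_map. rewrite Rmax0_idem. reflexivity. Qed.

Definition picard_limit (t : R) : F :=
  epsilon (inhabits zero) (limseq (fun n => picard_iter n t)).

Lemma picard_limit_spec t : limseq (fun n => picard_iter n t) (picard_limit t).
Proof.
  unfold picard_limit. apply epsilon_spec, limseq_exists. intros eta Heta.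
  destruct (radius_gap_small eta Heta) as [n0 Hn0]. exists n0.
  assert (Hexp : 0 < exp (- B * Rmax 0 t) <= 1)
    by (split; [apply exp_pos|apply exp_nonpos_le1; generalize (Rmax_l 0 t); nra]).
  assert (Hle : forall a b, (n0 <= a)%nat -> (a <= b)%nat ->
            norm (minus (picard_iter b t) (picard_iter a t)) <= eta).
  { intros a b Ha Hab. rewrite <- !(picard_iter_Rmax0 _ t).
    eapply Rle_trans; [apply picard_iter_cauchy; [exact Hab|apply Rmax_l]|].
    generalize (picard_radius_le a b Hab) (picard_radius_le_lim b) (Hn0 a Ha). nra. }
  intros n m Hn Hm. destruct (Nat.le_ge_cases n m) as [H|H].
  - rewrite normC_minus_sym. apply Hle; assumption.
  - apply Hle; assumption.
Qed.

Lemma picard_limit_tail t n : norm (minus (picard_limit t) (picard_iter n t))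
  <= (radius_lim - picard_radius n) * exp (- B * Rmax 0 t).
Proof.
  apply (limseq_le _ _ _ _ (picard_limit_spec t)). exists n. intros m Hm.
  rewrite <- (picard_iter_Rmax0 m t), <- (picard_iter_Rmax0 n t).
  eapply Rle_trans; [apply picard_iter_cauchy; [exact Hm|apply Rmax_l]|].
  apply Rmult_le_compat_r; [apply Rlt_le, exp_pos|]. generalize (picard_radius_le_lim m). lra.
Qed.

Lemma picard_limit_tail_small eta : 0 < eta ->
  exists n0, forall n t, (n0 <= n)%nat -> norm (minus (picard_limit t) (picard_iter n t)) <= eta.
Proof.
  intros Heta. destruct (radius_gap_small eta Heta) as [n0 Hn0]. exists n0. intros n t Hn.
  eapply Rle_trans; [apply picard_limit_tail|].
  assert (exp (- B * Rmax 0 t) <= 1) by (apply exp_nonpos_le1; generalize (Rmax_l 0 t); nra).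
  generalize (exp_pos (- B * Rmax 0 t)) (picard_radius_le_lim n) (Hn0 n Hn). nra.
Qed.

Lemma picard_limit_decay : decay_bound picard_limit radius_lim.
Proof.
  intros t Ht. rewrite <- (minusC_zero_r (picard_limit t)).
  apply (limseq_le _ _ _ _ (picard_limit_spec t)). exists O. intros m _.
  rewrite minusC_zero_r. eapply Rle_trans; [apply (proj2 (picard_iter_regular m)), Ht|].
  apply Rmult_le_compat_r; [apply Rlt_le, exp_pos|apply picard_radius_le_lim].
Qed.

Lemma picard_limit_continuous z : continuous picard_limit z.
Proof.
  apply continuousC_of_eps. intros eps Heps.
  destruct (picard_limit_tail_small (eps / 3)) as [n Hn]; [lra|]. specialize (Hn n).
  destruct (continuousC_eps _ z (proj1 (picard_iter_regular n) z) (eps / 3)) as [d [Hd H]]; [lra|].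
  exists d. split; [exact Hd|]. intros y Hy.
  generalize (Hn y (Nat.le_refl _)) (Hn z (Nat.le_refl _)) (H y Hy). intros A1 A2 A3.
  rewrite normC_minus_sym in A2.
  eapply Rle_lt_trans; [apply (normC_triangle_minus _ (picard_iter n y))|].
  eapply Rle_lt_trans; [apply Rplus_le_compat_l, (normC_triangle_minus _ (picard_iter n z))|].
  lra.
Qed.

Lemma picard_limit_fixed t : 0 <= t -> picard_limit t = picard_map picard_limit t.
Proof.
  intros Ht. apply (limseq_unique (fun n => picard_iter (S n) t)).
  { exact (limseq_shift _ _ (picard_limit_spec t)). }
  set (C := K * (radius_lim + radius_lim) * N + 1).
  assert (HC : 0 < C).
  { generalize radius_lim_nonneg N_nonneg. intros. unfold C.
    assert (0 <= K * (radius_lim + radius_lim) * N)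
      by (apply Rmult_le_pos; [apply Rmult_le_pos|]; lra). lra. }
  intros eta Heta.
  destruct (radius_gap_small (eta / C)) as [n0 Hn0]; [apply Rdiv_lt_0_compat; lra|].
  exists n0. intros n Hn. simpl.
  destruct (picard_iter_regular n) as [C1 B1]. destruct (picard_radius_le_fixed n) as [R1 _].
  generalize (picard_radius_le_lim n) (Hn0 n Hn) radius_lim_nonneg N_nonneg. intros H1 H2 H3 H4.
  assert (Hdiff : decay_bound (fun s => minus (picard_iter n s) (picard_limit s))
                    (radius_lim - picard_radius n)).
  { intros s Hs. rewrite normC_minus_sym. generalize (picard_limit_tail s n).
    rewrite Rmax_right by exact Hs. auto. }
  assert (HD : 0 <= radius_lim - picard_radius n) by lra.
  eapply Rle_trans; [apply (picard_map_minus_decay _ _ _ _ _ C1 picard_limit_continuous R1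
                             radius_lim_nonneg HD B1 picard_limit_decay Hdiff t Ht)|].
  assert (exp (- B * t) <= 1) by (apply exp_nonpos_le1; nra).
  assert (0 < exp (- B * t)) by apply exp_pos.
  set (D := radius_lim - picard_radius n) in *.
  assert (HKD : 0 <= K * D * (picard_radius n + radius_lim) * N)
    by (apply Rmult_le_pos; [apply Rmult_le_pos; [apply Rmult_le_pos|]|]; lra).
  apply Rle_trans with (K * D * (radius_lim + radius_lim) * N).
  { apply Rle_trans with (K * D * (picard_radius n + radius_lim) * N); [nra|].
    apply Rmult_le_compat_r; [lra|]. apply Rmult_le_compat_l; [apply Rmult_le_pos|]; lra. }
  apply Rle_trans with (D * C); [unfold C; nra|].
  apply Rle_trans with ((eta / C) * C); [apply Rmult_le_compat_r; lra|]. right; field; lra.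
Qed.

Lemma picard_limit_mild t : 0 <= t ->
  is_RInt (fun s => Sm (t - s) (plus (Pq (picard_limit s) (picard_limit s)) (xi s))) 0 t
    (minus (iF (picard_limit t)) (Sm t (iF f0))).
Proof.
  intros Ht.
  assert (Hvb := nonlinearity_bounded _ _ radius_lim_nonneg picard_limit_decay).
  assert (Hvc := nonlinearity_continuous _ picard_limit_continuous).
  rewrite (picard_limit_fixed t Ht). unfold picard_map. rewrite Rmax_right by exact Ht.
  rewrite (linC_plus iF), HSF, minusC_plus_l by (exact Ht || exact (proj1 iF_blin)).
  destruct (Req_dec t 0) as [->|Hne].
  - rewrite (duhamel_empty _ _ Hvc Hvb 0 (Rle_refl 0)), (linC_zero iF) by exact (proj1 iF_blin).
    exact (is_RInt_point _ 0).
  - eapply is_RInt_ext; [|apply (is_RInt_duhamel _ _ Hvc Hvb t); lra].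
    intros s Hs. rewrite Rmin_left in Hs by lra. rewrite Rmax_right in Hs by lra.
    unfold nonlinearity, xi_ext. rewrite !Rmax_right by lra. reflexivity.
Qed.

Theorem picard_global_solution : exists phi : R -> F,
    continuous_on_nonneg phi /\
    (forall t, 0 <= t ->
       is_RInt (fun s => Sm (t - s) (plus (Pq (phi s) (phi s)) (xi s))) 0 t
               (minus (iF (phi t)) (Sm t (iF f0)))) /\
    (forall t, 0 <= t -> norm (phi t) <= Rstar * exp (- B * t)).
Proof.
  exists picard_limit. split; [|split].
  - intros t _ eps Heps. destruct (continuousC_eps _ t (picard_limit_continuous t) eps Heps)
      as [d [Hd H]]. exists d. split; [exact Hd|]. intros s _ Hs. apply H, Hs.
  - exact picard_limit_mild.
  - intros t Ht. eapply Rle_trans; [apply picard_limit_decay, Ht|].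
    apply Rmult_le_compat_r; [apply Rlt_le, exp_pos|exact radius_lim_le_fixed].
Qed.

End Picard.

End Duhamel.
End SingularKernel.

Theorem proposition5p12
  (Fp F Fm : CompleteNormedModule R_AbsRing)
  (iP : Fp -> F) (iF : F -> Fm)
  (A : Fp -> Fm)
  (S : R -> Fm -> Fm) (SF : R -> F -> F) (SmF : R -> Fm -> F)
  (B N K J sigma : R) (mu : R -> R)
  (Pq : F -> F -> Fm) (xi : R -> Fm) (f0 : F)
  (* F_+ ↪ F ↪ F_- *)
  (HiP : dense_embedding iP) (HiF : dense_embedding iF)
  (HAlin : linear_map A)
  (HAnorm : exists c1 c2, 0 < c1 /\ 0 < c2 /\ forall f : Fp,
      c1 * norm f <= norm (iF (iP f)) + norm (A f) /\
      norm (iF (iP f)) + norm (A f) <= c2 * norm f)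
  (HS : generates_C0_semigroup (fun f => iF (iP f)) A S)
  (* e^{tA} maps F into F, jointly continuous F x [0,oo) -> F *)
  (HSF : forall t f, 0 <= t -> iF (SF t f) = S t (iF f))
  (HSFc : jointly_continuous_on (fun t => 0 <= t) SF)
  (* e^{tA} maps F_- into F for t > 0, jointly continuous F_- x (0,oo) -> F *)
  (HSmF : forall t f, 0 < t -> iF (SmF t f) = S t f)
  (HSmFc : jointly_continuous_on (fun t => 0 < t) SmF)
  (HB : 0 <= B) (HN : 0 < N)
  (HestF : forall t (f : F), 0 <= t -> norm (SF t f) <= exp (- B * t) * norm f)
  (HestFm : forall t (f : Fm), 0 < t -> norm (SmF t f) <= mu t * exp (- B * t) * norm f)
  (Hmu_cont : forall t, 0 < t -> continuity_pt mu t)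
  (Hmu_pos : forall t, 0 < t -> 0 < mu t)
  (Hsigma : 0 < sigma <= 1)
  (Hmu0 : exists C delta, 0 < delta /\ forall t, 0 < t < delta ->
      mu t <= C * Rpower t (- (1 - sigma)))
  (* ∫_0^t mu(t-s) e^{-Bs} ds <= N (improper at s = t; nonneg integrand,
     so stated via all truncations [0, t - eps]) *)
  (Hmu_int : forall t eps, 0 < eps < t ->
      RInt (fun s => mu (t - s) * exp (- B * s)) 0 (t - eps) <= N)
  (HPbil : is_bilinear Pq) (HK : 0 < K)
  (HPbnd : forall f g, norm (Pq f g) <= K * norm f * norm g)
  (Hxi_lip : locally_lipschitz_nonneg xi) (HJ : 0 <= J)
  (Hxi_bnd : forall t, 0 <= t -> norm (xi t) <= J * exp (- 2 * B * t))
  (Hsmall : 4 * K * N * (norm f0 + N * J) <= 1) :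
  exists phi : R -> F,
    continuous_on_nonneg phi /\
    (forall t, 0 <= t ->
       is_RInt (fun s => S (t - s) (plus (Pq (phi s) (phi s)) (xi s))) 0 t
               (minus (iF (phi t)) (S t (iF f0)))) /\
    (forall t, 0 <= t ->
       norm (phi t) <= (norm f0 + N * J) * Xfun (4 * K * N * (norm f0 + N * J))
                       * exp (- B * t)).
Proof.
  destruct HS as [HSb [HS0 [HSsemi [HScont _]]]].
  exact (picard_global_solution B N mu HB Hmu_cont Hmu_pos Hmu_int F Fm iF S SF SmF
    (proj1 HiF) (proj1 (proj2 HiF)) HSb HS0 HSsemi (fun x => HScont x 0 (Rle_refl 0))
    HSF HSFc HSmF HSmFc HestF HestFm Pq xi f0 K J HPbil HK HPbnd Hxi_lip HJ Hxi_bnd Hsmall).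
Qed.
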